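(* Let $S^0$ be an adequate semigroup with semilattice of idempotents $E^0$. Let $I=\bigcup_{x\in E^0}L_x$ be a left regular band and $\Lambda=\bigcup_{x\in E^0}R_x$ a right regular band having $E^0$ as a common semilattice transversal. Suppose that for each $x,y\in S^0$ there are mappings $\alpha_{x,y}:R_{x^\ast}\times L_{y^+}\to L_{(xy)^+}$ and $\beta_{x,y}:R_{x^\ast}\times L_{y^+}\to R_{(xy)^\ast}$ satisfying: 1. if $f\in R_{x^\ast}$, $g\in L_{y^+}$, $h\in R_{y^\ast}$, $k\in L_{z^+}$ ($x,y,z\in S^0$) then $(f,g)\alpha_{x,y}\,\big((f,g)\beta_{x,y}h,k\big)\alpha_{xy,z}=\big(f,g\,(h,k)\alpha_{y,z}\big)\alpha_{x,yz}$ and $\big(f,g\,(h,k)\alpha_{y,z}\big)\beta_{x,yz}\,(h,k)\beta_{y,z}=\big((f,g)\beta_{x,y}h,k\big)\beta_{xy,z}$; 2. $(x^\ast,y^+)\alpha_{x,y}=(xy)^+$ and $(x^\ast,y^+)\beta_{x,y}=(xy)^\ast$; 3. if $x,x_1,x_2\in S^0$, $e_1\in L_{x_1^+}$, $f_1\in R_{x_1^\ast}$, $e_2\in L_{x_2^+}$, $f_2\in R_{x_2^\ast}$, $e\in L_{x^+}$ and $e_1(f_1,e)\alpha_{x_1,x}=e_2(f_2,e)\alpha_{x_2,x}$, $x_1x=x_2x$ and $(f_1,e)\beta_{x_1,x}x^\ast=(f_2,e)\beta_{x_2,x}x^\ast$, then $e_1(f_1,e)\alpha_{x_1,x^+}=e_2(f_2,e)\alpha_{x_2,x^+}$,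 $x_1x^+=x_2x^+$ and $(f_1,e)\beta_{x_1,x^+}=(f_2,e)\beta_{x_2,x^+}$; 4. if $x,x_1,x_2\in S^0$, $e_1\in L_{x_1^+}$, $f_1\in R_{x_1^\ast}$, $e_2\in L_{x_2^+}$, $f_2\in R_{x_2^\ast}$, $f\in R_{x^\ast}$ and $x^+(f,e_1)\alpha_{x,x_1}=x^+(f,e_2)\alpha_{x,x_2}$, $xx_1=xx_2$ and $(f,e_1)\beta_{x,x_1}f_1=(f,e_2)\beta_{x,x_2}f_2$, then $(f,e_1)\alpha_{x^\ast,x_1}=(f,e_2)\alpha_{x^\ast,x_2}$, $x^\ast x_1=x^\ast x_2$ and $(f,e_1)\beta_{x^\ast,x_1}f_1=(f,e_2)\beta_{x^\ast,x_2}f_2$. Define on $W=\{(e,x,f)\in I\times S^0\times\Lambda: e\in L_{x^+},\ f\in R_{x^\ast}\}$ the multiplication $(e,x,f)(g,y,h)=\big(e(f,g)\alpha_{x,y},\,xy,\,(f,g)\beta_{x,y}h\big)$. Then $W$ is a quasi-adequate semigroup with an admissible adequate transversal isomorphic to $S^0$. If moreover 5. for all $f\in\Lambda$, $e\in I$: $(f^0,e)\alpha_{f^0,e^0}=f^0e$ and $(f,e^0)\beta_{f^0,e^0}=fe^0$, then $I(W)\cong I$ and $\Lambda(W)\cong\Lambda$. Moreover, every quasi-adequate semigroup with an admissible adequate transversal can be constructed (up to isomorphism) in this way.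
   Context: For a semigroup $S$, $S^1$ is $S$ with an identity adjoined, $E(S)$ its set of idempotents, $\mathcal{L},\mathcal{R}$ Green's relations. $\mathcal{R}^\ast=\{(a,b):\forall x,y\in S^1,\ xa=ya\iff xb=yb\}$ and $\mathcal{L}^\ast=\{(a,b):\forall x,y\in S^1,\ ax=ay\iff bx=by\}$. $S$ is abundant if every $\mathcal{R}^\ast$-class and every $\mathcal{L}^\ast$-class contains an idempotent; an abundant semigroup with commuting idempotents is adequate, and then $a^+$ (resp. $a^\ast$) denotes the unique idempotent $\mathcal{R}^\ast$-related (resp. $\mathcal{L}^\ast$-related) to $a$. An abundant subsemigroup $U$ of an abundant $S$ is a $\ast$-subsemigroup if $\mathcal{L}^\ast(U)=\mathcal{L}^\ast(S)\cap(U\times U)$ and $\mathcal{R}^\ast(U)=\mathcal{R}^\ast(S)\cap(U\times U)$. An adequate $\ast$-subsemigroup $S^0$ of an abundant semigroup $S$ is an adequate transversal if for each $x\in S$ there are a unique $\overline{x}\in S^0$ and idempotents $e,f$ of $S$ with $x=e\overline{x}f$, $e\,\mathcal{L}\,\overline{x}^+$, $f\,\mathcal{R}\,\overline{x}^\ast$; these $e,f$ are unique and written $e_x,f_x$; $I(S)=\{e_x:x\in S\}$, $\Lambda(S)=\{f_x:x\in S\}$ (so $I(W),\Lambda(W)$ refer to $W$ and its transversal). A semigroup is quasi-adequate if it is abundant and its idempotents form a subsemigroup; an adequate transversal of a quasi-adequate semigroup is admissible if $\overline{xy}=\overline{x}\,\overline{y}$ for all $x,y$. A left (right) regular band is a band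 with $xyx=xy$ ($xyx=yx$). $E^0$ is a semilattice transversal of a band $B$ if $E^0$ is a subsemilattice of $B$ and each $e\in B$ has exactly one inverse $e^0$ in $E^0$; ''common'' means $E^0\subseteq I\cap\Lambda$ with this property in both. For $x\in E^0$, $L_x$ is the $\mathcal{L}$-class of $x$ in $I$ and $R_x$ the $\mathcal{R}$-class of $x$ in $\Lambda$. Products such as $g\,(h,k)\alpha_{y,z}$, $e_1(f_1,e)\alpha$ are taken in $I$, and $(f,g)\beta_{x,y}h$, $(f_1,e)\beta x^\ast$ in $\Lambda$. *)

From Stdlib Require Import ClassicalEpsilon.

Set Implicit Arguments.

(** A "semigroup" is a subset [P] of an ambient type [T] with operation [mul]. *)
Definition allT {T : Type} : T -> Prop := fun _ => True.

(** Elements of S^1: [None] is the adjoined identity. *)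
Definition S1l {T : Type} (mul : T -> T -> T) (u : option T) (a : T) : T :=
  match u with None => a | Some t => mul t a end.
Definition S1r {T : Type} (mul : T -> T -> T) (a : T) (u : option T) : T :=
  match u with None => a | Some t => mul a t end.
Definition inP1 {T : Type} (P : T -> Prop) (u : option T) : Prop :=
  match u with None => True | Some t => P t end.

Definition is_semigroup {T : Type} (P : T -> Prop) (mul : T -> T -> T) : Prop :=
  (forall a b, P a -> P b -> P (mul a b)) /\
  (forall a b c, P a -> P b -> P c -> mul (mul a b) c = mul a (mul b c)).

Definition idem {T : Type} (P : T -> Prop) (mul : T -> T -> T) (e : T) : Prop :=
  P e /\ mul e e = e.

Definition GreenL {T : Type} (P : T -> Prop) (mul : T -> T -> T) (a b : T) : Prop :=
  P a /\ P b /\ (exists u, inP1 P u /\ a = S1l mul u b)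
              /\ (exists v, inP1 P v /\ b = S1l mul v a).
Definition GreenR {T : Type} (P : T -> Prop) (mul : T -> T -> T) (a b : T) : Prop :=
  P a /\ P b /\ (exists u, inP1 P u /\ a = S1r mul b u)
              /\ (exists v, inP1 P v /\ b = S1r mul a v).

Definition Rstar {T : Type} (P : T -> Prop) (mul : T -> T -> T) (a b : T) : Prop :=
  P a /\ P b /\ forall x y, inP1 P x -> inP1 P y ->
    (S1l mul x a = S1l mul y a <-> S1l mul x b = S1l mul y b).
Definition Lstar {T : Type} (P : T -> Prop) (mul : T -> T -> T) (a b : T) : Prop :=
  P a /\ P b /\ forall x y, inP1 P x -> inP1 P y ->
    (S1r mul a x = S1r mul a y <-> S1r mul b x = S1r mul b y).

Definition abundant {T : Type} (P : T -> Prop) (mul : T -> T -> T) : Prop :=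
  forall a, P a ->
    (exists e, idem P mul e /\ Rstar P mul a e) /\
    (exists e, idem P mul e /\ Lstar P mul a e).

Definition adequate {T : Type} (P : T -> Prop) (mul : T -> T -> T) : Prop :=
  abundant P mul /\
  forall e f, idem P mul e -> idem P mul f -> mul e f = mul f e.

Definition quasi_adequate {T : Type} (P : T -> Prop) (mul : T -> T -> T) : Prop :=
  abundant P mul /\
  forall e f, idem P mul e -> idem P mul f -> idem P mul (mul e f).

Definition star_subsemigroup {T : Type} (P U : T -> Prop) (mul : T -> T -> T) : Prop :=
  (forall a, U a -> P a) /\ is_semigroup U mul /\ abundant U mul /\
  (forall a b, U a -> U b -> (Lstar U mul a b <-> Lstar P mul a b)) /\
  (forall a b, U a -> U b -> (Rstar U mul a b <-> Rstar P mul a b)).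

(** [x = e xb f] with [xb] in [U], [e] idempotent L-related to [xb^+] and
    [f] idempotent R-related to [xb^*] (the idempotents of [U] that are
    R*- resp. L*-related to [xb] in [U]). *)
Definition decomp {T : Type} (P U : T -> Prop) (mul : T -> T -> T)
    (x xb e f : T) : Prop :=
  U xb /\ idem P mul e /\ idem P mul f /\ x = mul (mul e xb) f /\
  exists p q, idem U mul p /\ Rstar U mul xb p /\
              idem U mul q /\ Lstar U mul xb q /\
              GreenL P mul e p /\ GreenR P mul f q.

Definition is_bar {T : Type} (P U : T -> Prop) (mul : T -> T -> T) (x xb : T) : Prop :=
  exists e f, decomp P U mul x xb e f.

Definition adequate_transversal {T : Type} (P U : T -> Prop) (mul : T -> T -> T) : Prop :=
  star_subsemigroup P U mul /\ adequate U mul /\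
  forall x, P x -> exists! xb, is_bar P U mul x xb.

Definition admissible {T : Type} (P U : T -> Prop) (mul : T -> T -> T) : Prop :=
  quasi_adequate P mul /\ adequate_transversal P U mul /\
  forall x y xb yb, P x -> P y -> is_bar P U mul x xb -> is_bar P U mul y yb ->
    is_bar P U mul (mul x y) (mul xb yb).

Definition Iset {T : Type} (P U : T -> Prop) (mul : T -> T -> T) (e : T) : Prop :=
  exists x xb f, P x /\ decomp P U mul x xb e f.
Definition Lamset {T : Type} (P U : T -> Prop) (mul : T -> T -> T) (f : T) : Prop :=
  exists x xb e, P x /\ decomp P U mul x xb e f.

Definition iso {T1 T2 : Type} (P1 : T1 -> Prop) (mul1 : T1 -> T1 -> T1)
    (P2 : T2 -> Prop) (mul2 : T2 -> T2 -> T2) : Prop :=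
  is_semigroup P1 mul1 /\ is_semigroup P2 mul2 /\
  exists phi : T1 -> T2,
    (forall a, P1 a -> P2 (phi a)) /\
    (forall a b, P1 a -> P1 b -> phi a = phi b -> a = b) /\
    (forall c, P2 c -> exists a, P1 a /\ phi a = c) /\
    (forall a b, P1 a -> P1 b -> phi (mul1 a b) = mul2 (phi a) (phi b)).

Definition left_regular_band {T : Type} (mul : T -> T -> T) : Prop :=
  is_semigroup allT mul /\ (forall x, mul x x = x) /\
  (forall x y, mul (mul x y) x = mul x y).
Definition right_regular_band {T : Type} (mul : T -> T -> T) : Prop :=
  is_semigroup allT mul /\ (forall x, mul x x = x) /\
  (forall x y, mul (mul x y) x = mul y x).

Definition inverse {T : Type} (mul : T -> T -> T) (a b : T) : Prop :=
  mul (mul a b) a = a /\ mul (mul b a) b = b.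

(** The idempotents E^0 of S0, embedded into the band B via [j], form a
    semilattice transversal of B. *)
Definition sl_transversal {S B : Type} (mulS : S -> S -> S) (mulB : B -> B -> B)
    (j : S -> B) : Prop :=
  (forall e f, idem allT mulS e -> idem allT mulS f -> j (mulS e f) = mulB (j e) (j f)) /\
  (forall e f, idem allT mulS e -> idem allT mulS f -> j e = j f -> e = f) /\
  (forall b, exists! x, idem allT mulS x /\ inverse mulB b (j x)).

(** a^+ and a^* in an adequate semigroup (the unique such idempotents). *)
Definition plusf {T : Type} (mul : T -> T -> T) (a : T) : T :=
  epsilon (inhabits a) (fun e => idem allT mul e /\ Rstar allT mul a e).
Definition starf {T : Type} (mul : T -> T -> T) (a : T) : T :=
  epsilon (inhabits a) (fun e => idem allT mul e /\ Lstar allT mul a e).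

(** e in L_{x^+} (L-class in I), f in R_{x^*} (R-class in Lambda). *)
Definition inLc {S TI : Type} (mulS : S -> S -> S) (mulI : TI -> TI -> TI)
    (jI : S -> TI) (x : S) (e : TI) : Prop :=
  GreenL allT mulI e (jI (plusf mulS x)).
Definition inRc {S TL : Type} (mulS : S -> S -> S) (mulL : TL -> TL -> TL)
    (jL : S -> TL) (x : S) (f : TL) : Prop :=
  GreenR allT mulL f (jL (starf mulS x)).

Section Data.
Context (S0 : Type) (mulS : S0 -> S0 -> S0) (TI : Type) (mulI : TI -> TI -> TI)
        (TL : Type) (mulL : TL -> TL -> TL) (jI : S0 -> TI) (jL : S0 -> TL)
        (alpha : S0 -> S0 -> TL -> TI -> TI) (beta : S0 -> S0 -> TL -> TI -> TL).

Local Notation pl := (plusf mulS).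
Local Notation st := (starf mulS).
Local Notation inL := (inLc mulS mulI jI).
Local Notation inR := (inRc mulS mulL jL).

Definition W_cond1 : Prop :=
  forall x y z f g h k, inR x f -> inL y g -> inR y h -> inL z k ->
    mulI (alpha x y f g) (alpha (mulS x y) z (mulL (beta x y f g) h) k)
      = alpha x (mulS y z) f (mulI g (alpha y z h k)) /\
    mulL (beta x (mulS y z) f (mulI g (alpha y z h k))) (beta y z h k)
      = beta (mulS x y) z (mulL (beta x y f g) h) k.

Definition W_cond2 : Prop :=
  forall x y, alpha x y (jL (st x)) (jI (pl y)) = jI (pl (mulS x y)) /\
              beta x y (jL (st x)) (jI (pl y)) = jL (st (mulS x y)).

Definition W_cond3 : Prop :=
  forall x x1 x2 e1 f1 e2 f2 e,
    inL x1 e1 -> inR x1 f1 -> inL x2 e2 -> inR x2 f2 -> inL x e ->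
    mulI e1 (alpha x1 x f1 e) = mulI e2 (alpha x2 x f2 e) ->
    mulS x1 x = mulS x2 x ->
    mulL (beta x1 x f1 e) (jL (st x)) = mulL (beta x2 x f2 e) (jL (st x)) ->
    mulI e1 (alpha x1 (pl x) f1 e) = mulI e2 (alpha x2 (pl x) f2 e) /\
    mulS x1 (pl x) = mulS x2 (pl x) /\
    beta x1 (pl x) f1 e = beta x2 (pl x) f2 e.

Definition W_cond4 : Prop :=
  forall x x1 x2 e1 f1 e2 f2 f,
    inL x1 e1 -> inR x1 f1 -> inL x2 e2 -> inR x2 f2 -> inR x f ->
    mulI (jI (pl x)) (alpha x x1 f e1) = mulI (jI (pl x)) (alpha x x2 f e2) ->
    mulS x x1 = mulS x x2 ->
    mulL (beta x x1 f e1) f1 = mulL (beta x x2 f e2) f2 ->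
    alpha (st x) x1 f e1 = alpha (st x) x2 f e2 /\
    mulS (st x) x1 = mulS (st x) x2 /\
    mulL (beta (st x) x1 f e1) f1 = mulL (beta (st x) x2 f e2) f2.

(** Condition 5: f^0 (resp. e^0) is the inverse of f in E^0 inside Lambda
    (resp. of e inside I). *)
Definition W_cond5 : Prop :=
  forall (f : TL) (e : TI) (u v : S0),
    idem allT mulS u -> inverse mulL f (jL u) ->
    idem allT mulS v -> inverse mulI e (jI v) ->
    alpha u v (jL u) e = mulI (jI u) e /\
    beta u v f (jI v) = mulL f (jL v).

Definition W_data : Prop :=
  is_semigroup allT mulS /\ adequate allT mulS /\
  left_regular_band mulI /\ right_regular_band mulL /\
  sl_transversal mulS mulI jI /\ sl_transversal mulS mulL jL /\
  (forall e, exists x, idem allT mulS x /\ GreenL allT mulI e (jI x)) /\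
  (forall f, exists x, idem allT mulS x /\ GreenR allT mulL f (jL x)) /\
  (forall x y f g, inR x f -> inL y g ->
     inL (mulS x y) (alpha x y f g) /\ inR (mulS x y) (beta x y f g)) /\
  W_cond1 /\ W_cond2 /\ W_cond3 /\ W_cond4.

Definition Wset (w : TI * S0 * TL) : Prop :=
  let '(e, x, f) := w in inL x e /\ inR x f.

Definition mulW (w1 w2 : TI * S0 * TL) : TI * S0 * TL :=
  let '(e, x, f) := w1 in let '(g, y, h) := w2 in
  (mulI e (alpha x y f g), mulS x y, mulL (beta x y f g) h).

End Data.

(* W is a semigroup by condition 1, and its idempotents are the triples whose
   middle entry is idempotent.  The triple (e, x, f) is R*-related to
   (e, x^+, x^+) and L*-related to (x^*, x^*, f); conditions 3 and 4 are
   precisely the cancellation properties this needs.  The triples with middle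
   entry x and outer entries x^+ and x^* form a copy of S0 which is an
   admissible adequate transversal of W, and under condition 5 the triples
   (e, u, u) and (u, u, f) realise I(W) and Lambda(W).
   Conversely, for an admissible adequate transversal S0 of S take for I (resp.
   Lambda) the idempotents L-related (resp. R-related) to idempotents of S0,
   and let (f, g)alpha_{x,y} and (f, g)beta_{x,y} be the idempotent factors e_z
   and f_z of z = x f g y, whose transversal part is xy by admissibility.  Then
   (e, x, f) |-> e x f is an isomorphism of W onto S, and conditions 1-4 are
   transported from S along it. *)

From Stdlib Require Import ClassicalEpsilon ProofIrrelevance.

Set Implicit Arguments.
Unset Strict Implicit.

Lemma triple_inj {A B C : Type} (a a' : A) (b b' : B) (c c' : C) :
  (a, b, c) = (a', b', c') -> a = a' /\ b = b' /\ c = c'.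
Proof. now injection 1. Qed.

(** * Star relations and Green's relations on idempotents *)

Section StarRelations.
Variables (T : Type) (P : T -> Prop) (mul : T -> T -> T).

Lemma Rstar_refl a : P a -> Rstar P mul a a.
Proof. intros Ha; do 2 (split; [exact Ha|]); tauto. Qed.

Lemma Lstar_refl a : P a -> Lstar P mul a a.
Proof. intros Ha; do 2 (split; [exact Ha|]); tauto. Qed.

Lemma Rstar_sym a b : Rstar P mul a b -> Rstar P mul b a.
Proof.
  intros [Ha [Hb H]]; do 2 (split; [assumption|]).
  intros x y Hx Hy; specialize (H x y Hx Hy); tauto.
Qed.

Lemma Lstar_sym a b : Lstar P mul a b -> Lstar P mul b a.
Proof.
  intros [Ha [Hb H]]; do 2 (split; [assumption|]).
  intros x y Hx Hy; specialize (H x y Hx Hy); tauto.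
Qed.

Lemma Rstar_trans a b c : Rstar P mul a b -> Rstar P mul b c -> Rstar P mul a c.
Proof.
  intros [Ha [_ H]] [_ [Hc H']]; do 2 (split; [assumption|]).
  intros x y Hx Hy; specialize (H x y Hx Hy); specialize (H' x y Hx Hy); tauto.
Qed.

Lemma Lstar_trans a b c : Lstar P mul a b -> Lstar P mul b c -> Lstar P mul a c.
Proof.
  intros [Ha [_ H]] [_ [Hc H']]; do 2 (split; [assumption|]).
  intros x y Hx Hy; specialize (H x y Hx Hy); specialize (H' x y Hx Hy); tauto.
Qed.

Lemma Rstar_cancel a b s t :
  Rstar P mul a b -> P s -> P t -> mul s a = mul t a -> mul s b = mul t b.
Proof. intros [_ [_ H]] Hs Ht; exact (proj1 (H (Some s) (Some t) Hs Ht)). Qed.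

Lemma Lstar_cancel a b s t :
  Lstar P mul a b -> P s -> P t -> mul a s = mul a t -> mul b s = mul b t.
Proof. intros [_ [_ H]] Hs Ht; exact (proj1 (H (Some s) (Some t) Hs Ht)). Qed.

Lemma Rstar_fix a b s : Rstar P mul a b -> P s -> mul s a = a -> mul s b = b.
Proof. intros [_ [_ H]] Hs; exact (proj1 (H (Some s) None Hs I)). Qed.

Lemma Lstar_fix a b s : Lstar P mul a b -> P s -> mul a s = a -> mul b s = b.
Proof. intros [_ [_ H]] Hs; exact (proj1 (H (Some s) None Hs I)). Qed.

(* Only elements of [P] need testing: the adjoined identity of [S^1] reduces to
   them through [a = e a] and [e = e e]. *)
Lemma Rstar_intro a e : P a -> idem P mul e -> mul e a = a ->
  (forall s t, P s -> P t -> mul s a = mul t a <-> mul s e = mul t e) ->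
  Rstar P mul a e.
Proof.
  intros Ha [He Hee] Hea H; do 2 (split; [assumption|]).
  intros [s|] [t|] Hs Ht; cbn in *.
  - apply H; assumption.
  - rewrite <- Hee at 2; rewrite <- Hea at 2; apply H; assumption.
  - rewrite <- Hee at 1; rewrite <- Hea at 1; apply H; assumption.
  - tauto.
Qed.

Lemma Lstar_intro a e : P a -> idem P mul e -> mul a e = a ->
  (forall s t, P s -> P t -> mul a s = mul a t <-> mul e s = mul e t) ->
  Lstar P mul a e.
Proof.
  intros Ha [He Hee] Hea H; do 2 (split; [assumption|]).
  intros [s|] [t|] Hs Ht; cbn in *.
  - apply H; assumption.
  - rewrite <- Hee at 2; rewrite <- Hea at 2; apply H; assumption.
  - rewrite <- Hee at 1; rewrite <- Hea at 1; apply H; assumption.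
  - tauto.
Qed.

Lemma Rstar_idem e f : idem P mul e -> idem P mul f -> Rstar P mul e f ->
  mul e f = f /\ mul f e = e.
Proof.
  intros [He Hee] [Hf Hff] H; split.
  - exact (Rstar_fix H He Hee).
  - exact (Rstar_fix (Rstar_sym H) Hf Hff).
Qed.

Lemma Lstar_idem e f : idem P mul e -> idem P mul f -> Lstar P mul e f ->
  mul f e = f /\ mul e f = e.
Proof.
  intros [He Hee] [Hf Hff] H; split.
  - exact (Lstar_fix H He Hee).
  - exact (Lstar_fix (Lstar_sym H) Hf Hff).
Qed.

Hypothesis HP : is_semigroup P mul.

Lemma GreenL_idemP a b : idem P mul a -> idem P mul b ->
  GreenL P mul a b <-> mul a b = a /\ mul b a = b.
Proof.
  intros [Ha Haa] [Hb Hbb]; destruct HP as [_ mulA]; split.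
  - intros [_ [_ [[[u|] [Hu Eu]] [[v|] [Hv Ev]]]]]; cbn in *;
      split; (subst a + subst b); try rewrite mulA by assumption;
      congruence.
  - intros [E1 E2]; do 2 (split; [assumption|]).
    split; [exists (Some a)|exists (Some b)]; cbn; auto.
Qed.

Lemma GreenR_idemP a b : idem P mul a -> idem P mul b ->
  GreenR P mul a b <-> mul b a = a /\ mul a b = b.
Proof.
  intros [Ha Haa] [Hb Hbb]; destruct HP as [_ mulA]; split.
  - intros [_ [_ [[[u|] [Hu Eu]] [[v|] [Hv Ev]]]]]; cbn in *;
      split; (subst a + subst b); try rewrite <- mulA by assumption;
      congruence.
  - intros [E1 E2]; do 2 (split; [assumption|]).
    split; [exists (Some a)|exists (Some b)]; cbn; auto.
Qed.

End StarRelations.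

(** * Transfer along injective homomorphisms *)

Section Image.
Variables (A B : Type) (mA : A -> A -> A) (mB : B -> B -> B) (f : A -> B).
Variable Q : B -> Prop.
Hypothesis f_mul : forall a b, f (mA a b) = mB (f a) (f b).
Hypothesis f_inj : forall a b, f a = f b -> a = b.
Hypothesis Q_image : forall b, Q b <-> exists a, b = f a.

Let inP1_allT (s : option A) : inP1 allT s.
Proof. destruct s; exact I. Qed.

Let inP1_map (s : option A) : inP1 Q (option_map f s).
Proof. destruct s as [s|]; [apply Q_image; now exists s|exact I]. Qed.

Let inP1_image s' : inP1 Q s' -> exists s, s' = option_map f s.
Proof.
  destruct s' as [s'|]; cbn; [|now exists None].
  intros [s ->]%Q_image; now exists (Some s).
Qed.

Let S1l_map s a : S1l mB (option_map f s) (f a) = f (S1l mA s a).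
Proof. destruct s; cbn; auto. Qed.

Let S1r_map s a : S1r mB (f a) (option_map f s) = f (S1r mA a s).
Proof. destruct s; cbn; auto. Qed.

Lemma Rstar_image a a' : Rstar Q mB (f a) (f a') <-> Rstar allT mA a a'.
Proof.
  split.
  - intros [_ [_ H]]; do 2 (split; [exact I|]); intros s t _ _.
    specialize (H _ _ (inP1_map s) (inP1_map t)); rewrite !S1l_map in H.
    split; intros E; apply f_inj, H; now rewrite E.
  - intros [_ [_ H]]; split; [|split]; [apply Q_image; eauto..|].
    intros s' t' [s ->]%inP1_image [t ->]%inP1_image; rewrite !S1l_map.
    specialize (H s t (inP1_allT s) (inP1_allT t)).
    split; intros E%f_inj; f_equal; now apply H.
Qed.

Lemma Lstar_image a a' : Lstar Q mB (f a) (f a') <-> Lstar allT mA a a'.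
Proof.
  split.
  - intros [_ [_ H]]; do 2 (split; [exact I|]); intros s t _ _.
    specialize (H _ _ (inP1_map s) (inP1_map t)); rewrite !S1r_map in H.
    split; intros E; apply f_inj, H; now rewrite E.
  - intros [_ [_ H]]; split; [|split]; [apply Q_image; eauto..|].
    intros s' t' [s ->]%inP1_image [t ->]%inP1_image; rewrite !S1r_map.
    specialize (H s t (inP1_allT s) (inP1_allT t)).
    split; intros E%f_inj; f_equal; now apply H.
Qed.

Lemma idem_image a : idem Q mB (f a) <-> mA a a = a.
Proof.
  split.
  - intros [_ E]; apply f_inj; now rewrite f_mul.
  - intros E; split; [apply Q_image; eauto|now rewrite <- f_mul, E].
Qed.

End Image.

(** * Adequate semigroups *)

Section Adequate.
Variables (S0 : Type) (mulS : S0 -> S0 -> S0).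
Hypothesis HS : is_semigroup allT mulS.
Hypothesis HA : adequate allT mulS.
#[local] Set Default Proof Using "HS HA".

Local Notation pl := (plusf mulS).
Local Notation st := (starf mulS).

Lemma mulSA a b c : mulS (mulS a b) c = mulS a (mulS b c).
Proof. now apply HS. Qed.

Lemma idem_comm e f : mulS e e = e -> mulS f f = f -> mulS e f = mulS f e.
Proof. intros; now apply HA. Qed.

Lemma idem_mul e f : mulS e e = e -> mulS f f = f -> mulS (mulS e f) (mulS e f) = mulS e f.
Proof.
  intros He Hf.
  rewrite mulSA, <- (mulSA f e f), (idem_comm Hf He), mulSA, Hf, <- mulSA, He; reflexivity.
Qed.

Lemma plus_spec x : idem allT mulS (pl x) /\ Rstar allT mulS x (pl x).
Proof. unfold plusf; apply epsilon_spec; destruct (proj1 HA x I) as [[e He] _]; now exists e. Qed.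

Lemma star_spec x : idem allT mulS (st x) /\ Lstar allT mulS x (st x).
Proof. unfold starf; apply epsilon_spec; destruct (proj1 HA x I) as [_ [e He]]; now exists e. Qed.

Lemma plus_idem x : mulS (pl x) (pl x) = pl x.
Proof. apply plus_spec. Qed.

Lemma star_idem x : mulS (st x) (st x) = st x.
Proof. apply star_spec. Qed.

Lemma plus_left x : mulS (pl x) x = x.
Proof. exact (Rstar_fix (Rstar_sym (proj2 (plus_spec x))) I (plus_idem x)). Qed.

Lemma star_right x : mulS x (st x) = x.
Proof. exact (Lstar_fix (Lstar_sym (proj2 (star_spec x))) I (star_idem x)). Qed.

Lemma plus_unique x e : mulS e e = e -> Rstar allT mulS x e -> e = pl x.
Proof.
  intros He H; destruct (plus_spec x) as [Hp Hx].
  assert (Hr : Rstar allT mulS e (pl x)) by eauto using Rstar_trans, Rstar_sym.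
  destruct (Rstar_idem (conj I He) Hp Hr) as [E1 E2].
  now rewrite <- E2, idem_comm, E1 by apply plus_idem || exact He.
Qed.

Lemma star_unique x e : mulS e e = e -> Lstar allT mulS x e -> e = st x.
Proof.
  intros He H; destruct (star_spec x) as [Hs Hx].
  assert (Hl : Lstar allT mulS e (st x)) by eauto using Lstar_trans, Lstar_sym.
  destruct (Lstar_idem (conj I He) Hs Hl) as [E1 E2].
  now rewrite <- E2, idem_comm, E1 by apply star_idem || exact He.
Qed.

Lemma plus_of_idem e : mulS e e = e -> pl e = e.
Proof. intros He; symmetry; apply plus_unique, Rstar_refl; easy. Qed.

Lemma star_of_idem e : mulS e e = e -> st e = e.
Proof. intros He; symmetry; apply star_unique, Lstar_refl; easy. Qed.

Lemma plus_plus x : pl (pl x) = pl x.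
Proof. apply plus_of_idem, plus_idem. Qed.

Lemma star_plus x : st (pl x) = pl x.
Proof. apply star_of_idem, plus_idem. Qed.

Lemma plus_star x : pl (st x) = st x.
Proof. apply plus_of_idem, star_idem. Qed.

Lemma star_star x : st (st x) = st x.
Proof. apply star_of_idem, star_idem. Qed.

Lemma plus_mulr x y : mulS (pl x) (pl (mulS x y)) = pl (mulS x y).
Proof.
  apply (Rstar_fix (proj2 (plus_spec (mulS x y))) I).
  now rewrite <- mulSA, plus_left.
Qed.

Lemma star_mull x y : mulS (st (mulS x y)) (st y) = st (mulS x y).
Proof.
  apply (Lstar_fix (proj2 (star_spec (mulS x y))) I).
  now rewrite mulSA, star_right.
Qed.

Lemma Rstar_plusP x y : Rstar allT mulS x y <-> pl x = pl y.
Proof.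
  split.
  - intros H; apply plus_unique; [apply plus_idem|].
    exact (Rstar_trans (Rstar_sym H) (proj2 (plus_spec x))).
  - intros E; apply (Rstar_trans (proj2 (plus_spec x))).
    rewrite E; apply Rstar_sym, plus_spec.
Qed.

Lemma Lstar_starP x y : Lstar allT mulS x y <-> st x = st y.
Proof.
  split.
  - intros H; apply star_unique; [apply star_idem|].
    exact (Lstar_trans (Lstar_sym H) (proj2 (star_spec x))).
  - intros E; apply (Lstar_trans (proj2 (star_spec x))).
    rewrite E; apply Lstar_sym, star_spec.
Qed.

End Adequate.

(** * The semigroup W *)

Section Construction.
Variables (S0 : Type) (mulS : S0 -> S0 -> S0) (TI : Type) (mulI : TI -> TI -> TI)
  (TL : Type) (mulL : TL -> TL -> TL) (jI : S0 -> TI) (jL : S0 -> TL)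
  (alpha : S0 -> S0 -> TL -> TI -> TI) (beta : S0 -> S0 -> TL -> TI -> TL).

Local Notation pl := (plusf mulS).
Local Notation st := (starf mulS).
Local Notation inL := (inLc mulS mulI jI).
Local Notation inR := (inRc mulS mulL jL).
Local Notation WS := (Wset mulS mulI mulL jI jL).
Local Notation mW := (mulW mulS mulI mulL alpha beta).

Hypothesis HS : is_semigroup allT mulS.
Hypothesis HA : adequate allT mulS.
Hypothesis HI : is_semigroup allT mulI.
Hypothesis mulI_idem : forall e, mulI e e = e.
Hypothesis HL : is_semigroup allT mulL.
Hypothesis mulL_idem : forall f, mulL f f = f.
Hypothesis jI_mul : forall u v, idem allT mulS u -> idem allT mulS v ->
  jI (mulS u v) = mulI (jI u) (jI v).
Hypothesis jL_mul : forall u v, idem allT mulS u -> idem allT mulS v ->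
  jL (mulS u v) = mulL (jL u) (jL v).
Hypothesis alpha_beta_range : forall x y f g, inR x f -> inL y g ->
  inL (mulS x y) (alpha x y f g) /\ inR (mulS x y) (beta x y f g).
Hypothesis H1 : W_cond1 mulS mulI mulL jI jL alpha beta.
Hypothesis H2 : W_cond2 mulS jI jL alpha beta.
Hypothesis H3 : W_cond3 mulS mulI mulL jI jL alpha beta.
Hypothesis H4 : W_cond4 mulS mulI mulL jI jL alpha beta.

Let mulIA a b c : mulI (mulI a b) c = mulI a (mulI b c) := proj2 HI a b c I I I.
Let mulLA a b c : mulL (mulL a b) c = mulL a (mulL b c) := proj2 HL a b c I I I.

Lemma inL_iff x e : inL x e <-> mulI e (jI (pl x)) = e /\ mulI (jI (pl x)) e = jI (pl x).
Proof. apply (GreenL_idemP HI); split; auto; exact I. Qed.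

Lemma inR_iff x f : inR x f <-> mulL (jL (st x)) f = f /\ mulL f (jL (st x)) = jL (st x).
Proof. apply (GreenR_idemP HL); split; auto; exact I. Qed.

Lemma inL_plus x : inL x (jI (pl x)).
Proof. apply inL_iff; split; apply mulI_idem. Qed.

Lemma inR_star x : inR x (jL (st x)).
Proof. apply inR_iff; split; apply mulL_idem. Qed.

Lemma inL_of_idem u : mulS u u = u -> inL u (jI u).
Proof. intros Hu; apply inL_iff; rewrite plus_of_idem by easy; split; apply mulI_idem. Qed.

Lemma inR_of_idem u : mulS u u = u -> inR u (jL u).
Proof. intros Hu; apply inR_iff; rewrite star_of_idem by easy; split; apply mulL_idem. Qed.

Let plus_idemS x : idem allT mulS (pl x) := conj I (plus_idem HS HA x).
Let star_idemS x : idem allT mulS (st x) := conj I (star_idem HS HA x).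
Local Hint Resolve plus_idem star_idem plus_idemS star_idemS : core.

Lemma jI_plus_mulr x y : mulI (jI (pl x)) (jI (pl (mulS x y))) = jI (pl (mulS x y)).
Proof. now rewrite <- jI_mul, plus_mulr by auto. Qed.

Lemma jI_plus_mull x y : mulI (jI (pl (mulS x y))) (jI (pl x)) = jI (pl (mulS x y)).
Proof. now rewrite <- jI_mul, idem_comm, plus_mulr by auto. Qed.

Lemma jL_star_mull x y : mulL (jL (st (mulS x y))) (jL (st y)) = jL (st (mulS x y)).
Proof. now rewrite <- jL_mul, star_mull by auto. Qed.

Lemma jL_star_mulr x y : mulL (jL (st y)) (jL (st (mulS x y))) = jL (st (mulS x y)).
Proof. now rewrite <- jL_mul, idem_comm, star_mull by auto. Qed.

Lemma mulW_triple e x f g y h :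
  mW (e, x, f) (g, y, h) = (mulI e (alpha x y f g), mulS x y, mulL (beta x y f g) h).
Proof. reflexivity. Qed.

Lemma WS_mul a b : WS a -> WS b -> WS (mW a b).
Proof.
  destruct a as [[e x] f], b as [[g y] h]; intros [He Hf] [Hg Hh].
  destruct (alpha_beta_range Hf Hg) as [Ha Hb].
  apply inL_iff in Ha, He; apply inR_iff in Hb, Hh; split.
  - apply inL_iff; split; [now rewrite mulIA, (proj1 Ha)|].
    assert (Pe : mulI (jI (pl (mulS x y))) e = jI (pl (mulS x y))).
    { now rewrite <- (jI_plus_mull x y) at 1; rewrite mulIA, (proj2 He), jI_plus_mull. }
    now rewrite <- mulIA, Pe, (proj2 Ha).
  - apply inR_iff; split; [now rewrite <- mulLA, (proj1 Hb)|].
    assert (Ph : mulL h (jL (st (mulS x y))) = jL (st (mulS x y))).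
    { now rewrite <- (jL_star_mulr x y) at 1; rewrite <- mulLA, (proj2 Hh), jL_star_mulr. }
    now rewrite mulLA, Ph, (proj2 Hb).
Qed.

Lemma WS_assoc a b c : WS a -> WS b -> WS c -> mW (mW a b) c = mW a (mW b c).
Proof.
  destruct a as [[e x] f], b as [[g y] h], c as [[k z] l].
  intros [_ Hf] [Hg Hh] [Hk _]; destruct (H1 Hf Hg Hh Hk) as [E1 E2].
  cbn; now rewrite mulIA, E1, <- mulLA, <- E2, mulSA.
Qed.

Lemma W_semigroup : is_semigroup WS mW.
Proof. split; [exact WS_mul|exact WS_assoc]. Qed.

Lemma mulW_absorb e x f g y h : WS (e, x, f) -> WS (g, y, h) ->
  pl (mulS x y) = pl x -> st (mulS x y) = st y ->
  mW (e, x, f) (g, y, h) = (e, mulS x y, h).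
Proof.
  intros [He Hf] [Hg Hh] Ep Es; destruct (alpha_beta_range Hf Hg) as [Ha Hb].
  apply inL_iff in Ha, He; apply inR_iff in Hb, Hh; rewrite Ep in Ha; rewrite Es in Hb.
  rewrite mulW_triple; f_equal; [f_equal|].
  - now rewrite <- (proj1 He) at 1; rewrite mulIA, (proj2 Ha), (proj1 He).
  - now rewrite <- (proj1 Hh) at 1; rewrite <- mulLA, (proj2 Hb), (proj1 Hh).
Qed.

Lemma mulW_rect m e c e' c' : mulS m m = m -> WS (e, m, c) -> WS (e', m, c') ->
  mW (e, m, c) (e', m, c') = (e, m, c').
Proof. intros Hm W1 W2; rewrite mulW_absorb, Hm; auto; now rewrite Hm. Qed.

Definition mid (w : TI * S0 * TL) : S0 := snd (fst w).

Lemma mid_mul a b : mid (mW a b) = mulS (mid a) (mid b).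
Proof. now destruct a as [[e x] f], b as [[g y] h]. Qed.

Lemma idem_mid w : idem WS mW w -> mulS (mid w) (mid w) = mid w.
Proof. intros [_ E]; now rewrite <- mid_mul, E. Qed.

Lemma idem_W w : WS w -> mulS (mid w) (mid w) = mid w -> idem WS mW w.
Proof. destruct w as [[e x] f]; intros Hw Hx; split; [exact Hw|now apply mulW_rect]. Qed.

Lemma W_idem_mul a b : idem WS mW a -> idem WS mW b -> idem WS mW (mW a b).
Proof.
  intros Ha Hb; apply idem_W; [apply WS_mul; [apply Ha|apply Hb]|].
  rewrite mid_mul; apply idem_mul; auto using idem_mid.
Qed.

Definition wplus (w : TI * S0 * TL) : TI * S0 * TL :=
  let '(e, x, _) := w in (e, pl x, jL (pl x)).
Definition wstar (w : TI * S0 * TL) : TI * S0 * TL :=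
  let '(_, x, f) := w in (jI (st x), st x, f).

Lemma WS_wplus w : WS w -> WS (wplus w).
Proof.
  destruct w as [[e x] f]; intros [He _]; split; [|apply inR_of_idem; auto].
  unfold inLc; now rewrite plus_plus.
Qed.

Lemma WS_wstar w : WS w -> WS (wstar w).
Proof.
  destruct w as [[e x] f]; intros [_ Hf]; split; [apply inL_of_idem; auto|].
  unfold inRc; now rewrite star_star.
Qed.

Lemma wplus_idem w : WS w -> idem WS mW (wplus w).
Proof. intros Hw; apply idem_W; [now apply WS_wplus|destruct w as [[e x] f]; cbn; auto]. Qed.

Lemma wstar_idem w : WS w -> idem WS mW (wstar w).
Proof. intros Hw; apply idem_W; [now apply WS_wstar|destruct w as [[e x] f]; cbn; auto]. Qed.

Lemma wplus_left w : WS w -> mW (wplus w) w = w.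
Proof.
  intros Hw; pose proof (WS_wplus Hw) as Hp; destruct w as [[e x] f]; cbn [wplus] in *.
  rewrite mulW_absorb, plus_left; auto; now rewrite plus_left, ?plus_plus.
Qed.

Lemma wstar_right w : WS w -> mW w (wstar w) = w.
Proof.
  intros Hw; pose proof (WS_wstar Hw) as Hs; destruct w as [[e x] f]; cbn [wstar] in *.
  rewrite mulW_absorb, star_right; auto; now rewrite star_right, ?star_star.
Qed.

Lemma Rstar_wplus w : WS w -> Rstar WS mW w (wplus w).
Proof.
  intros Hw; apply Rstar_intro; auto using wplus_idem, wplus_left.
  intros s t Hs Ht; split.
  - destruct w as [[e x] f], s as [[e1 x1] f1], t as [[e2 x2] f2].
    intros E; injection E as Ea Eb Ec.
    destruct Hw as [He Hf], Hs as [He1 Hf1], Ht as [He2 Hf2].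
    assert (Ec' : mulL (beta x1 x f1 e) (jL (st x)) = mulL (beta x2 x f2 e) (jL (st x))).
    { apply inR_iff in Hf; now rewrite <- (proj2 Hf), <- !mulLA, Ec. }
    destruct (H3 He1 Hf1 He2 Hf2 He Ea Eb Ec') as [Fa [Fb Fc]].
    cbn; now rewrite Fa, Fb, Fc.
  - intros E; rewrite <- (wplus_left Hw), <- !WS_assoc, E; auto using WS_wplus.
Qed.

Lemma Lstar_wstar w : WS w -> Lstar WS mW w (wstar w).
Proof.
  intros Hw; apply Lstar_intro; auto using wstar_idem, wstar_right.
  intros s t Hs Ht; split.
  - destruct w as [[e x] f], s as [[e1 x1] f1], t as [[e2 x2] f2].
    intros E; injection E as Ea Eb Ec.
    destruct Hw as [He Hf], Hs as [He1 Hf1], Ht as [He2 Hf2].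
    assert (Ea' : mulI (jI (pl x)) (alpha x x1 f e1) = mulI (jI (pl x)) (alpha x x2 f e2)).
    { apply inL_iff in He; now rewrite <- (proj2 He), !mulIA, Ea. }
    destruct (H4 He1 Hf1 He2 Hf2 Hf Ea' Eb Ec) as [Fa [Fb Fc]].
    cbn; now rewrite Fa, Fb, Fc.
  - intros E; rewrite <- (wstar_right Hw), !WS_assoc, E; auto using WS_wstar.
Qed.

Lemma W_quasi_adequate : quasi_adequate WS mW.
Proof.
  split; [|exact W_idem_mul].
  intros a Ha; split.
  - exists (wplus a); auto using wplus_idem, Rstar_wplus.
  - exists (wstar a); auto using wstar_idem, Lstar_wstar.
Qed.

Definition iota (x : S0) : TI * S0 * TL := (jI (pl x), x, jL (st x)).
Definition Uiota (w : TI * S0 * TL) : Prop := exists x, w = iota x.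

Lemma WS_iota x : WS (iota x).
Proof. split; [apply inL_plus|apply inR_star]. Qed.

Lemma iota_mul x y : mW (iota x) (iota y) = iota (mulS x y).
Proof.
  unfold iota; rewrite mulW_triple, (proj1 (H2 x y)), (proj2 (H2 x y)).
  now rewrite jI_plus_mulr, jL_star_mull.
Qed.

Lemma iota_inj x y : iota x = iota y -> x = y.
Proof. now injection 1. Qed.

Lemma iota_of_idem u : mulS u u = u -> iota u = (jI u, u, jL u).
Proof. intros Hu; unfold iota; now rewrite plus_of_idem, star_of_idem. Qed.

Lemma iota_idem u : mulS u u = u -> idem WS mW (iota u).
Proof. intros Hu; apply idem_W; [apply WS_iota|exact Hu]. Qed.

Lemma wplus_iota x : wplus (iota x) = iota (pl x).
Proof. unfold iota; cbn; now rewrite plus_plus, star_plus. Qed.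

Lemma wstar_iota x : wstar (iota x) = iota (st x).
Proof. unfold iota; cbn; now rewrite plus_star, star_star. Qed.

Let iota_hom a b : iota (mulS a b) = mW (iota a) (iota b) := eq_sym (iota_mul a b).
Let Uiota_image w : Uiota w <-> exists x, w = iota x := iff_refl _.

Lemma Rstar_iotaU x y : Rstar Uiota mW (iota x) (iota y) <-> Rstar allT mulS x y.
Proof. exact (Rstar_image iota_hom iota_inj Uiota_image x y). Qed.

Lemma Lstar_iotaU x y : Lstar Uiota mW (iota x) (iota y) <-> Lstar allT mulS x y.
Proof. exact (Lstar_image iota_hom iota_inj Uiota_image x y). Qed.

Lemma idem_iotaU x : idem Uiota mW (iota x) <-> mulS x x = x.
Proof. exact (idem_image iota_hom iota_inj Uiota_image x). Qed.

Lemma Rstar_iotaW x y : Rstar WS mW (iota x) (iota y) <-> Rstar allT mulS x y.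
Proof.
  rewrite Rstar_plusP by auto; split.
  - intros H.
    assert (Hp : Rstar WS mW (iota (pl x)) (iota (pl y))).
    { rewrite <- !wplus_iota.
      apply (Rstar_trans (Rstar_sym (Rstar_wplus (WS_iota x)))).
      exact (Rstar_trans H (Rstar_wplus (WS_iota y))). }
    apply Rstar_idem in Hp; auto using iota_idem.
    rewrite !iota_mul in Hp; destruct Hp as [E1%iota_inj E2%iota_inj].
    pose proof (idem_comm HS HA (plus_idem HS HA x) (plus_idem HS HA y)); congruence.
  - intros E; apply (Rstar_trans (Rstar_wplus (WS_iota x))).
    rewrite wplus_iota, E, <- wplus_iota; apply Rstar_sym, Rstar_wplus, WS_iota.
Qed.

Lemma Lstar_iotaW x y : Lstar WS mW (iota x) (iota y) <-> Lstar allT mulS x y.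
Proof.
  rewrite Lstar_starP by auto; split.
  - intros H.
    assert (Hs : Lstar WS mW (iota (st x)) (iota (st y))).
    { rewrite <- !wstar_iota.
      apply (Lstar_trans (Lstar_sym (Lstar_wstar (WS_iota x)))).
      exact (Lstar_trans H (Lstar_wstar (WS_iota y))). }
    apply Lstar_idem in Hs; auto using iota_idem.
    rewrite !iota_mul in Hs; destruct Hs as [E1%iota_inj E2%iota_inj].
    pose proof (idem_comm HS HA (star_idem HS HA x) (star_idem HS HA y)); congruence.
  - intros E; apply (Lstar_trans (Lstar_wstar (WS_iota x))).
    rewrite wstar_iota, E, <- wstar_iota; apply Lstar_sym, Lstar_wstar, WS_iota.
Qed.

Lemma decomp_wplus_wstar w : WS w -> decomp WS Uiota mW w (iota (mid w)) (wplus w) (wstar w).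
Proof.
  intros Hw; pose proof (WS_wplus Hw) as Hp; pose proof (WS_wstar Hw) as Hs.
  destruct w as [[e x] f]; cbn [mid fst snd wplus wstar] in *.
  split; [now exists x|].
  split; [exact (wplus_idem Hw)|split; [exact (wstar_idem Hw)|split]].
  - assert (Hr : mW (iota x) (jI (st x), st x, f) = (jI (pl x), x, f)).
    { pose proof (WS_iota x) as Hi; unfold iota in *.
      rewrite mulW_absorb, star_right by (now rewrite ?star_right, ?star_star); auto. }
    assert (Hr' : WS (jI (pl x), x, f)) by (split; [apply inL_plus|exact (proj2 Hw)]).
    rewrite WS_assoc, Hr, mulW_absorb, plus_left by (auto using WS_iota;
      now rewrite plus_left, ?plus_plus); reflexivity.
  - exists (iota (pl x)), (iota (st x)); rewrite Rstar_iotaU, Lstar_iotaU, !idem_iotaU.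
    split; [auto|split; [apply plus_spec; auto|]].
    split; [auto|split; [apply star_spec; auto|]].
    rewrite (GreenL_idemP W_semigroup), (GreenR_idemP W_semigroup)
      by first [exact (wplus_idem Hw) | exact (wstar_idem Hw) | apply iota_idem; auto].
    pose proof (WS_iota (pl x)) as Ip; pose proof (WS_iota (st x)) as Is.
    rewrite !iota_of_idem in * by auto.
    repeat split; apply mulW_rect; auto.
Qed.

Lemma mid_iota x : mid (iota x) = x.
Proof. reflexivity. Qed.

Lemma decomp_iota w xb E F : decomp WS Uiota mW w xb E F ->
  exists y, xb = iota y /\ mid E = pl y /\ mid F = st y /\
    mW (iota (pl y)) E = iota (pl y) /\ mW F (iota (st y)) = iota (st y).
Proof.
  intros [[y ->] [HE [HF [_ [p [q [Hp [Hpr [Hq [Hql [HEL HFR]]]]]]]]]]].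
  destruct (proj1 Hp) as [u ->]; destruct (proj1 Hq) as [v ->].
  apply idem_iotaU in Hp, Hq; apply Rstar_iotaU in Hpr; apply Lstar_iotaU in Hql.
  apply plus_unique in Hpr; auto; apply star_unique in Hql; auto; subst u v.
  rewrite (GreenL_idemP W_semigroup) in HEL by auto using iota_idem.
  rewrite (GreenR_idemP W_semigroup) in HFR by auto using iota_idem.
  exists y; split; [reflexivity|split; [|split; [|tauto]]].
  - destruct HEL as [E1 E2]; apply (f_equal mid) in E1, E2.
    rewrite mid_mul, mid_iota in E1, E2.
    pose proof (idem_comm HS HA (idem_mid HE) (plus_idem HS HA y)); congruence.
  - destruct HFR as [E1 E2]; apply (f_equal mid) in E1, E2.
    rewrite mid_mul, mid_iota in E1, E2.
    pose proof (idem_comm HS HA (idem_mid HF) (star_idem HS HA y)); congruence.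
Qed.

Lemma is_bar_iota w xb : WS w -> is_bar WS Uiota mW w xb <-> xb = iota (mid w).
Proof.
  intros Hw; split.
  - intros [E [F D]]; destruct (decomp_iota D) as [y [-> [HE [HF _]]]].
    destruct D as [_ [_ [_ [Ew _]]]].
    now rewrite Ew, !mid_mul, HE, HF, mid_iota, plus_left, star_right.
  - intros ->; exists (wplus w), (wstar w); now apply decomp_wplus_wstar.
Qed.

Lemma Uiota_WS w : Uiota w -> WS w.
Proof. intros [x ->]; apply WS_iota. Qed.

Lemma Uiota_semigroup : is_semigroup Uiota mW.
Proof.
  split.
  - intros a b [x ->] [y ->]; exists (mulS x y); apply iota_mul.
  - intros a b c Ha Hb Hc; apply WS_assoc; now apply Uiota_WS.
Qed.

Lemma Uiota_adequate : adequate Uiota mW.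
Proof.
  split.
  - intros a [x ->]; split.
    + exists (iota (pl x)); rewrite idem_iotaU, Rstar_iotaU; split; [auto|apply plus_spec; auto].
    + exists (iota (st x)); rewrite idem_iotaU, Lstar_iotaU; split; [auto|apply star_spec; auto].
  - intros a b Ha Hb; destruct (proj1 Ha) as [x ->], (proj1 Hb) as [y ->].
    apply idem_iotaU in Ha, Hb; now rewrite !iota_mul, (idem_comm HS HA Ha Hb).
Qed.

Lemma W_adequate_transversal : adequate_transversal WS Uiota mW.
Proof.
  split; [|split; [exact Uiota_adequate|]].
  - split; [exact Uiota_WS|split; [exact Uiota_semigroup|split; [exact (proj1 Uiota_adequate)|]]].
    split; intros a b [x ->] [y ->].
    + rewrite Lstar_iotaU, Lstar_iotaW; tauto.
    + rewrite Rstar_iotaU, Rstar_iotaW; tauto.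
  - intros w Hw; exists (iota (mid w)); split; [now apply is_bar_iota|].
    intros xb H; symmetry; now apply is_bar_iota.
Qed.

Lemma W_admissible : admissible WS Uiota mW.
Proof.
  split; [exact W_quasi_adequate|split; [exact W_adequate_transversal|]].
  intros x y xb yb Hx Hy Bx By; apply is_bar_iota in Bx, By; auto; subst.
  apply is_bar_iota; [now apply WS_mul|]; now rewrite iota_mul, mid_mul.
Qed.

Lemma Uiota_iso : iso Uiota mW allT mulS.
Proof.
  split; [exact Uiota_semigroup|split; [exact HS|]].
  exists mid; split; [now intros|split; [|split]].
  - intros a b [x ->] [y ->]; rewrite !mid_iota; now intros ->.
  - intros c _; exists (iota c); split; [now exists c|reflexivity].
  - intros a b _ _; apply mid_mul.
Qed.

Hypothesis jI_inj : forall u v, idem allT mulS u -> idem allT mulS v -> jI u = jI v -> u = v.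
Hypothesis jL_inj : forall u v, idem allT mulS u -> idem allT mulS v -> jL u = jL v -> u = v.
Hypothesis I_cover : forall e, exists x, idem allT mulS x /\ GreenL allT mulI e (jI x).
Hypothesis L_cover : forall f, exists x, idem allT mulS x /\ GreenR allT mulL f (jL x).
Hypothesis H5 : W_cond5 mulS mulI mulL jI jL alpha beta.

Lemma WS_Iset_triple g a : mulS a a = a -> inL a g -> WS (g, a, jL a).
Proof. intros Ha Hg; split; [exact Hg|now apply inR_of_idem]. Qed.

Lemma WS_Lamset_triple h a : mulS a a = a -> inR a h -> WS (jI a, a, h).
Proof. intros Ha Hh; split; [now apply inL_of_idem|exact Hh]. Qed.

Lemma iota_mulW_rect m e c : mulS m m = m -> WS (e, m, c) ->
  mW (iota m) (e, m, c) = (jI m, m, c) /\ mW (e, m, c) (iota m) = (e, m, jL m).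
Proof.
  intros Hm Hw; pose proof (WS_iota m) as Hi; rewrite iota_of_idem in * by exact Hm.
  split; now apply mulW_rect.
Qed.

Lemma iota_absorb_l_thd m e c : mulS m m = m -> WS (e, m, c) ->
  mW (iota m) (e, m, c) = iota m -> c = jL m.
Proof.
  intros Hm Hw; rewrite (proj1 (iota_mulW_rect Hm Hw)), iota_of_idem by exact Hm.
  now injection 1.
Qed.

Lemma iota_absorb_r_fst m e c : mulS m m = m -> WS (e, m, c) ->
  mW (e, m, c) (iota m) = iota m -> e = jI m.
Proof.
  intros Hm Hw; rewrite (proj2 (iota_mulW_rect Hm Hw)), iota_of_idem by exact Hm.
  now injection 1.
Qed.

Lemma Iset_iff E : Iset WS Uiota mW E <->
  exists g a, E = (g, a, jL a) /\ mulS a a = a /\ inL a g.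
Proof.
  split.
  - intros [w [xb [F [_ D]]]]; pose proof D as [_ [[HE _] _]].
    destruct (decomp_iota D) as [y [_ [HmE [_ [Hu _]]]]].
    destruct E as [[g m] c]; cbn in HmE; subst m.
    exists g, (pl y); split; [|split; [auto|apply HE]].
    now rewrite (iota_absorb_l_thd (plus_idem HS HA y) HE Hu).
  - intros [g [a [-> [Ha Hg]]]]; pose proof (WS_Iset_triple Ha Hg) as Hw.
    exists (g, a, jL a), (iota a), (wstar (g, a, jL a)); split; [exact Hw|].
    pose proof (decomp_wplus_wstar Hw) as D; cbn [wplus mid fst snd] in D.
    now rewrite plus_of_idem in D.
Qed.

Lemma Lamset_iff F : Lamset WS Uiota mW F <->
  exists h a, F = (jI a, a, h) /\ mulS a a = a /\ inR a h.
Proof.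
  split.
  - intros [w [xb [E [_ D]]]]; pose proof D as [_ [_ [[HF _] _]]].
    destruct (decomp_iota D) as [y [_ [_ [HmF [_ Hu]]]]].
    destruct F as [[e m] h]; cbn in HmF; subst m.
    exists h, (st y); split; [|split; [auto|apply HF]].
    now rewrite (iota_absorb_r_fst (star_idem HS HA y) HF Hu).
  - intros [h [a [-> [Ha Hh]]]]; pose proof (WS_Lamset_triple Ha Hh) as Hw.
    exists (jI a, a, h), (iota a), (wplus (jI a, a, h)); split; [exact Hw|].
    pose proof (decomp_wplus_wstar Hw) as D; cbn [wstar mid fst snd] in D.
    now rewrite star_of_idem in D.
Qed.

Lemma Iset_mul g a g' b : mulS a a = a -> mulS b b = b -> inL a g -> inL b g' ->
  mW (g, a, jL a) (g', b, jL b) = (mulI g g', mulS a b, jL (mulS a b)).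
Proof.
  intros Ha Hb Hg Hg'.
  pose proof (WS_Iset_triple Ha Hg) as W1; pose proof (WS_Iset_triple Hb Hg') as W2.
  (* [iota (a b)] absorbs the product from the left, which pins down its third
     component; condition 5 gives the first one. *)
  assert (Hu : mW (iota (mulS a b)) (mW (g, a, jL a) (g', b, jL b)) = iota (mulS a b)).
  { pose proof (WS_iota a); pose proof (WS_iota b).
    transitivity (mW (iota b) (mW (mW (iota a) (g, a, jL a)) (g', b, jL b))).
    - rewrite (idem_comm HS HA Ha Hb), <- iota_mul; now rewrite !WS_assoc by auto using WS_mul.
    - rewrite (proj1 (iota_mulW_rect Ha W1)), <- iota_of_idem by exact Ha.
      rewrite <- WS_assoc, iota_mul, <- (idem_comm HS HA Ha Hb), <- iota_mul by auto.
      now rewrite WS_assoc, (proj1 (iota_mulW_rect Hb W2)), <- iota_of_idem by auto. }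
  pose proof (WS_mul W1 W2) as Wy.
  apply inL_iff in Hg, Hg'; rewrite plus_of_idem in Hg, Hg' by assumption.
  assert (Hinv : inverse mulI g' (jI b)).
  { split; [rewrite (proj1 Hg')|rewrite (proj2 Hg')]; now rewrite mulI_idem. }
  assert (Hinv' : inverse mulL (jL a) (jL a)) by (split; now rewrite !mulL_idem).
  destruct (H5 (conj I Ha) Hinv' (conj I Hb) Hinv) as [A5 _].
  revert Hu Wy; rewrite mulW_triple, A5, <- mulIA, (proj1 Hg); intros Hu Wy.
  f_equal; apply (iota_absorb_l_thd (idem_mul HS HA Ha Hb) Wy Hu).
Qed.

Lemma Lamset_mul h a h' b : mulS a a = a -> mulS b b = b -> inR a h -> inR b h' ->
  mW (jI a, a, h) (jI b, b, h') = (jI (mulS a b), mulS a b, mulL h h').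
Proof.
  intros Ha Hb Hh Hh'.
  pose proof (WS_Lamset_triple Ha Hh) as W1; pose proof (WS_Lamset_triple Hb Hh') as W2.
  assert (Hu : mW (mW (jI a, a, h) (jI b, b, h')) (iota (mulS a b)) = iota (mulS a b)).
  { pose proof (WS_iota a); pose proof (WS_iota b).
    transitivity (mW (mW (jI a, a, h) (mW (jI b, b, h') (iota b))) (iota a)).
    - rewrite (idem_comm HS HA Ha Hb), <- iota_mul; now rewrite !WS_assoc by auto using WS_mul.
    - rewrite (proj2 (iota_mulW_rect Hb W2)), <- iota_of_idem by exact Hb.
      rewrite WS_assoc, iota_mul, <- (idem_comm HS HA Ha Hb), <- iota_mul by auto.
      now rewrite <- WS_assoc, (proj2 (iota_mulW_rect Ha W1)), <- iota_of_idem by auto. }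
  pose proof (WS_mul W1 W2) as Wy.
  apply inR_iff in Hh, Hh'; rewrite star_of_idem in Hh, Hh' by assumption.
  assert (Hinv : inverse mulL h (jL a)).
  { split; [now rewrite (proj2 Hh), (proj1 Hh)|now rewrite (proj1 Hh), (proj2 Hh)]. }
  assert (Hinv' : inverse mulI (jI b) (jI b)) by (split; now rewrite !mulI_idem).
  destruct (H5 (conj I Ha) Hinv (conj I Hb) Hinv') as [_ B5].
  revert Hu Wy; rewrite mulW_triple, B5, mulLA, (proj1 Hh'); intros Hu Wy.
  f_equal; f_equal; apply (iota_absorb_r_fst (idem_mul HS HA Ha Hb) Wy Hu).
Qed.

Lemma idem_eq_of_common_L g a b : mulS a a = a -> mulS b b = b -> inL a g -> inL b g -> a = b.
Proof.
  intros Ha Hb Hga Hgb; apply inL_iff in Hga, Hgb.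
  rewrite plus_of_idem in Hga, Hgb by assumption.
  assert (Eab : mulS a b = a).
  { apply jI_inj; [exact (conj I (idem_mul HS HA Ha Hb))|exact (conj I Ha)|].
    rewrite jI_mul by (split; [exact I|assumption]).
    now rewrite <- (proj2 Hga) at 1; rewrite mulIA, (proj1 Hgb), (proj2 Hga). }
  assert (Eba : mulS b a = b).
  { apply jI_inj; [exact (conj I (idem_mul HS HA Hb Ha))|exact (conj I Hb)|].
    rewrite jI_mul by (split; [exact I|assumption]).
    now rewrite <- (proj2 Hgb) at 1; rewrite mulIA, (proj1 Hga), (proj2 Hgb). }
  pose proof (idem_comm HS HA Ha Hb); congruence.
Qed.

Lemma idem_eq_of_common_R h a b : mulS a a = a -> mulS b b = b -> inR a h -> inR b h -> a = b.
Proof.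
  intros Ha Hb Hha Hhb; apply inR_iff in Hha, Hhb.
  rewrite star_of_idem in Hha, Hhb by assumption.
  assert (Eab : mulS a b = b).
  { apply jL_inj; [exact (conj I (idem_mul HS HA Ha Hb))|exact (conj I Hb)|].
    rewrite jL_mul by (split; [exact I|assumption]).
    now rewrite <- (proj2 Hhb) at 1; rewrite <- mulLA, (proj1 Hha), (proj2 Hhb). }
  assert (Eba : mulS b a = a).
  { apply jL_inj; [exact (conj I (idem_mul HS HA Hb Ha))|exact (conj I Ha)|].
    rewrite jL_mul by (split; [exact I|assumption]).
    now rewrite <- (proj2 Hha) at 1; rewrite <- mulLA, (proj1 Hhb), (proj2 Hha). }
  pose proof (idem_comm HS HA Ha Hb); congruence.
Qed.

Lemma Iset_iso : iso (Iset WS Uiota mW) mW allT mulI.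
Proof.
  assert (Iset_WS : forall E, Iset WS Uiota mW E -> WS E).
  { intros E [g [a [-> [Ha Hg]]]]%Iset_iff; now apply WS_Iset_triple. }
  split; [split|split; [exact HI|]].
  - intros E E' [g [a [-> [Ha Hg]]]]%Iset_iff [g' [b [-> [Hb Hg']]]]%Iset_iff.
    pose proof (WS_mul (WS_Iset_triple Ha Hg) (WS_Iset_triple Hb Hg')) as Hy.
    rewrite Iset_mul in * by assumption.
    apply Iset_iff; exists (mulI g g'), (mulS a b).
    split; [reflexivity|split; [auto using idem_mul|apply Hy]].
  - intros E1 E2 E3 ? ? ?; apply WS_assoc; auto.
  - exists (fun w => fst (fst w)); split; [now intros|split; [|split]].
    + intros E E' [g [a [-> [Ha Hg]]]]%Iset_iff [g' [b [-> [Hb Hg']]]]%Iset_iff.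
      cbn; intros <-; now rewrite (idem_eq_of_common_L Ha Hb Hg Hg').
    + intros g _; destruct (I_cover g) as [x [[_ Hx] Hgx]].
      exists (g, x, jL x); split; [|reflexivity].
      apply Iset_iff; exists g, x; unfold inLc; now rewrite plus_of_idem.
    + intros E E' [g [a [-> [Ha Hg]]]]%Iset_iff [g' [b [-> [Hb Hg']]]]%Iset_iff.
      now rewrite Iset_mul.
Qed.

Lemma Lamset_iso : iso (Lamset WS Uiota mW) mW allT mulL.
Proof.
  assert (Lamset_WS : forall F, Lamset WS Uiota mW F -> WS F).
  { intros F [h [a [-> [Ha Hh]]]]%Lamset_iff; now apply WS_Lamset_triple. }
  split; [split|split; [exact HL|]].
  - intros F F' [h [a [-> [Ha Hh]]]]%Lamset_iff [h' [b [-> [Hb Hh']]]]%Lamset_iff.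
    pose proof (WS_mul (WS_Lamset_triple Ha Hh) (WS_Lamset_triple Hb Hh')) as Hy.
    rewrite Lamset_mul in * by assumption.
    apply Lamset_iff; exists (mulL h h'), (mulS a b).
    split; [reflexivity|split; [auto using idem_mul|apply Hy]].
  - intros F1 F2 F3 ? ? ?; apply WS_assoc; auto.
  - exists snd; split; [now intros|split; [|split]].
    + intros F F' [h [a [-> [Ha Hh]]]]%Lamset_iff [h' [b [-> [Hb Hh']]]]%Lamset_iff.
      cbn; intros <-; now rewrite (idem_eq_of_common_R Ha Hb Hh Hh').
    + intros h _; destruct (L_cover h) as [x [[_ Hx] Hhx]].
      exists (jI x, x, h); split; [|reflexivity].
      apply Lamset_iff; exists h, x; unfold inRc; now rewrite star_of_idem.
    + intros F F' [h [a [-> [Ha Hh]]]]%Lamset_iff [h' [b [-> [Hb Hh']]]]%Lamset_iff.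
      now rewrite Lamset_mul.
Qed.

End Construction.

(** * Every admissible adequate transversal arises this way *)

Section Converse.
Variables (T : Type) (mul : T -> T -> T) (U : T -> Prop).
Hypothesis HT : is_semigroup allT mul.
Hypothesis Had : admissible allT U mul.

Local Notation val := (@proj1_sig _ _).

Let mulA a b c : mul (mul a b) c = mul a (mul b c) := proj2 HT a b c I I I.
Let U_star : star_subsemigroup allT U mul := proj1 (proj1 (proj2 Had)).

Lemma idem_mul_closed e f : mul e e = e -> mul f f = f -> mul (mul e f) (mul e f) = mul e f.
Proof. intros He Hf; exact (proj2 (proj2 (proj1 Had) e f (conj I He) (conj I Hf))). Qed.

Lemma U_mul a b : U a -> U b -> U (mul a b).
Proof. destruct U_star as [_ [[HU _] _]]; auto. Qed.

Lemma U_adequate : adequate U mul.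
Proof. exact (proj1 (proj2 (proj1 (proj2 Had)))). Qed.

Lemma U_idem_comm u v : U u -> U v -> mul u u = u -> mul v v = v -> mul u v = mul v u.
Proof. intros; now apply (proj2 U_adequate). Qed.

Lemma Rstar_U a b : U a -> U b -> Rstar U mul a b <-> Rstar allT mul a b.
Proof. destruct U_star as [_ [_ [_ [_ HR]]]]; auto. Qed.

Lemma Lstar_U a b : U a -> U b -> Lstar U mul a b <-> Lstar allT mul a b.
Proof. destruct U_star as [_ [_ [_ [HL _]]]]; auto. Qed.

Lemma bar_unique z b b' : is_bar allT U mul z b -> is_bar allT U mul z b' -> b = b'.
Proof.
  intros H H'; destruct (proj2 (proj2 (proj1 (proj2 Had))) z I) as [c [_ Hc]].
  now rewrite <- (Hc _ H), <- (Hc _ H').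
Qed.

Lemma bar_mul x y b c : is_bar allT U mul x b -> is_bar allT U mul y c ->
  is_bar allT U mul (mul x y) (mul b c).
Proof. now apply (proj2 (proj2 Had)). Qed.

Lemma U_idem_Rstar_eq p p' : U p -> U p' -> mul p p = p -> mul p' p' = p' ->
  Rstar U mul p p' -> p = p'.
Proof.
  intros Hp Hp' E E' H; destruct (Rstar_idem (conj Hp E) (conj Hp' E') H) as [E1 E2].
  now rewrite <- E2, U_idem_comm.
Qed.

Lemma U_idem_Lstar_eq q q' : U q -> U q' -> mul q q = q -> mul q' q' = q' ->
  Lstar U mul q q' -> q = q'.
Proof.
  intros Hq Hq' E E' H; destruct (Lstar_idem (conj Hq E) (conj Hq' E') H) as [E1 E2].
  now rewrite <- E1, U_idem_comm.
Qed.

(* [Lidem e u]: [e] is an idempotent L-related to the idempotent [u] of [U].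
   Such [e] form the band [I]; dually [Ridem] gives [Lambda]. *)
Definition Lidem (e u : T) : Prop :=
  mul e e = e /\ U u /\ mul u u = u /\ mul e u = e /\ mul u e = u.
Definition Ridem (f v : T) : Prop :=
  mul f f = f /\ U v /\ mul v v = v /\ mul v f = f /\ mul f v = v.

Lemma decompP z b e f : decomp allT U mul z b e f <->
  U b /\ z = mul (mul e b) f /\
  exists p q, Lidem e p /\ Ridem f q /\ Rstar U mul b p /\ Lstar U mul b q.
Proof.
  split.
  - intros [Hb [[_ He] [[_ Hf] [Ez [p [q [[Hp Hpp] [Hbp [[Hq Hqq] [Hbq [HL HR]]]]]]]]]]].
    rewrite (GreenL_idemP HT) in HL by (split; [exact I|assumption]).
    rewrite (GreenR_idemP HT) in HR by (split; [exact I|assumption]).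
    split; [exact Hb|split; [exact Ez|exists p, q]]; unfold Lidem, Ridem; tauto.
  - intros [Hb [Ez [p [q [[He [Hp [Hpp HL]]] [[Hf [Hq [Hqq HR]]] [Hbp Hbq]]]]]]].
    split; [exact Hb|split; [split; [exact I|exact He]|split; [split; [exact I|exact Hf]|]]].
    split; [exact Ez|exists p, q].
    split; [now split|split; [exact Hbp|split; [now split|split; [exact Hbq|]]]].
    split; [apply (GreenL_idemP HT)|apply (GreenR_idemP HT)]; now try split.
Qed.

Lemma decomp_Rstar z b e f : decomp allT U mul z b e f -> Rstar allT mul z e.
Proof.
  intros [Hb [Ez [p [q [[He [Hp [Hpp [Ep _]]]] [[_ [Hq [Hqq [_ Eq]]]] [Hbp Hbq]]]]]]]%decompP.
  apply Rstar_U in Hbp; apply Lstar_U in Hbq; auto.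
  assert (Hzq : mul z q = mul e b).
  { now rewrite Ez, mulA, Eq, mulA, (Lstar_fix (Lstar_sym Hbq) I Hqq). }
  apply Rstar_intro; [exact I|now split| |].
  - now rewrite Ez, <- !mulA, He.
  - intros s t _ _; split; intros E.
    + assert (E' : mul (mul s e) b = mul (mul t e) b) by now rewrite !mulA, <- Hzq, <- !mulA, E.
      apply (Rstar_cancel Hbp I I) in E'; now rewrite !mulA, Ep in E'.
    + now rewrite Ez, <- !mulA, E.
Qed.

Lemma decomp_Lstar z b e f : decomp allT U mul z b e f -> Lstar allT mul z f.
Proof.
  intros [Hb [Ez [p [q [[_ [Hp [Hpp [_ Ep]]]] [[Hf [Hq [Hqq [Eq _]]]] [Hbp Hbq]]]]]]]%decompP.
  apply Rstar_U in Hbp; apply Lstar_U in Hbq; auto.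
  assert (Hpz : mul p z = mul b f).
  { now rewrite Ez, <- mulA, <- mulA, Ep, (Rstar_fix (Rstar_sym Hbp) I Hpp). }
  apply Lstar_intro; [exact I|now split| |].
  - now rewrite Ez, !mulA, Hf.
  - intros s t _ _; split; intros E.
    + assert (E' : mul b (mul f s) = mul b (mul f t)) by now rewrite <- !mulA, <- Hpz, !mulA, E.
      apply (Lstar_cancel Hbq I I) in E'; now rewrite <- !mulA, Eq in E'.
    + now rewrite Ez, !mulA, E.
Qed.

Lemma decomp_unique z b e f b' e' f' :
  decomp allT U mul z b e f -> decomp allT U mul z b' e' f' -> b = b' /\ e = e' /\ f = f'.
Proof.
  intros D D'.
  assert (Eb : b = b') by (apply (bar_unique (z := z)); [exists e, f|exists e', f']; auto).
  subst b'.
  pose proof (Rstar_trans (Rstar_sym (decomp_Rstar D)) (decomp_Rstar D')) as He.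
  pose proof (Lstar_trans (Lstar_sym (decomp_Lstar D)) (decomp_Lstar D')) as Hf.
  apply decompP in D as [Hb [_ [p [q [[Hee [Hp [Hpp [Ep _]]]] [[Hff [Hq [Hqq [Eq _]]]] [Hbp Hbq]]]]]]].
  apply decompP in D' as [_ [_ [p' [q' [[Hee' [Hp' [Hpp' [_ Ep']]]] [[Hff' [Hq' [Hqq' [_ Eq']]]] [Hbp' Hbq']]]]]]].
  assert (Ep0 : p = p').
  { apply U_idem_Rstar_eq; auto; exact (Rstar_trans (Rstar_sym Hbp) Hbp'). }
  assert (Eq0 : q = q').
  { apply U_idem_Lstar_eq; auto; exact (Lstar_trans (Lstar_sym Hbq) Hbq'). }
  subst p' q'.
  destruct (Rstar_idem (conj I Hee) (conj I Hee') He) as [E1 _].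
  destruct (Lstar_idem (conj I Hff) (conj I Hff') Hf) as [F1 _].
  split; [reflexivity|split].
  - now rewrite <- Ep, <- Ep', <- mulA, Ep, E1.
  - now rewrite <- Eq, <- Eq', mulA, Eq, F1.
Qed.

Definition decomp_choice (z : T) : T * T * T :=
  epsilon (inhabits (z, z, z))
    (fun t => decomp allT U mul z (fst (fst t)) (snd (fst t)) (snd t)).
Definition bar_of (z : T) : T := fst (fst (decomp_choice z)).
Definition e_of (z : T) : T := snd (fst (decomp_choice z)).
Definition f_of (z : T) : T := snd (decomp_choice z).

Lemma decomp_choice_spec z : decomp allT U mul z (bar_of z) (e_of z) (f_of z).
Proof.
  unfold bar_of, e_of, f_of, decomp_choice; apply epsilon_spec.
  destruct (proj2 (proj2 (proj1 (proj2 Had))) z I) as [b [[e [f D]] _]].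
  now exists (b, e, f).
Qed.

Lemma decomp_choice_eq z b e f : decomp allT U mul z b e f ->
  b = bar_of z /\ e = e_of z /\ f = f_of z.
Proof. intros D; exact (decomp_unique D (decomp_choice_spec z)). Qed.

Lemma Lidem_refl u : U u -> mul u u = u -> Lidem u u.
Proof. now repeat split. Qed.

Lemma Ridem_refl v : U v -> mul v v = v -> Ridem v v.
Proof. now repeat split. Qed.

Lemma decomp_intro b e f p q : U b -> Lidem e p -> Ridem f q ->
  Rstar U mul b p -> Lstar U mul b q -> decomp allT U mul (mul (mul e b) f) b e f.
Proof. intros; apply decompP; split; [assumption|split; [reflexivity|now exists p, q]]. Qed.

Lemma Lidem_bar e u : Lidem e u -> is_bar allT U mul e u.
Proof.
  intros He; pose proof He as [Hee [Hu [Huu [Eu _]]]]; exists e, u.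
  assert (Ez : e = mul (mul e u) u) by now rewrite mulA, Huu, Eu.
  rewrite Ez at 1.
  apply decomp_intro with u u; auto using Ridem_refl, Rstar_refl, Lstar_refl.
Qed.

Lemma Ridem_bar f v : Ridem f v -> is_bar allT U mul f v.
Proof.
  intros Hf; pose proof Hf as [Hff [Hv [Hvv [Ev _]]]]; exists v, f.
  assert (Ez : f = mul (mul v v) f) by now rewrite Hvv, Ev.
  rewrite Ez at 1.
  apply decomp_intro with v v; auto using Lidem_refl, Rstar_refl, Lstar_refl.
Qed.

Lemma decomp_idem z w h k : decomp allT U mul z w h k -> mul w w = w ->
  z = mul (mul h w) k /\ Lidem h w /\ Ridem k w.
Proof.
  intros [Hw [Ez [p [q [Hh [Hk [Hwp Hwq]]]]]]]%decompP Hww.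
  assert (Ep : w = p) by (apply U_idem_Rstar_eq; auto; apply Hh).
  assert (Eq : w = q) by (apply U_idem_Lstar_eq; auto; apply Hk).
  now subst p q.
Qed.

Lemma Lidem_mul e u e' v : Lidem e u -> Lidem e' v -> Lidem (mul e e') (mul u v).
Proof.
  intros He He'; pose proof He as [Hee [Hu [Huu [E1 E2]]]];
    pose proof He' as [Hee' [Hv [Hvv [E1' E2']]]].
  assert (Huv : U (mul u v)) by now apply U_mul.
  assert (Hw : mul (mul u v) (mul u v) = mul u v) by now apply idem_mul_closed.
  assert (Wy : mul (mul u v) (mul e e') = mul u v).
  { rewrite (U_idem_comm Hu Hv), mulA, <- (mulA u e), E2, <- mulA, <- (U_idem_comm Hu Hv) by auto.
    now rewrite mulA, E2'. }
  destruct (bar_mul (Lidem_bar He) (Lidem_bar He')) as [h [k D]].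
  destruct (decomp_idem D Hw) as [Ey [[Hh [_ [_ [F1 _]]]] [_ [_ [_ [_ F4]]]]]].
  assert (Yw : mul (mul e e') (mul u v) = h) by now rewrite Ey, mulA, F4, F1.
  assert (A1 : mul h (mul e e') = mul e e') by now rewrite Ey, <- !mulA, Hh.
  assert (A2 : mul h (mul e e') = h) by (rewrite <- Yw at 1; now rewrite mulA, Wy).
  repeat split; auto using idem_mul_closed; congruence.
Qed.

Lemma Ridem_mul f v f' v' : Ridem f v -> Ridem f' v' -> Ridem (mul f f') (mul v v').
Proof.
  intros Hf Hf'; pose proof Hf as [Hff [Hv [Hvv [E1 E2]]]];
    pose proof Hf' as [Hff' [Hv' [Hvv' [E1' E2']]]].
  assert (Hvv'U : U (mul v v')) by now apply U_mul.
  assert (Hw : mul (mul v v') (mul v v') = mul v v') by now apply idem_mul_closed.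
  assert (yW : mul (mul f f') (mul v v') = mul v v').
  { rewrite (U_idem_comm Hv Hv'), mulA, <- (mulA f' v'), E2', (U_idem_comm Hv' Hv) by auto.
    now rewrite <- mulA, E2. }
  destruct (bar_mul (Ridem_bar Hf) (Ridem_bar Hf')) as [h [k D]].
  destruct (decomp_idem D Hw) as [Ey [[_ [_ [_ [_ F2]]]] [Hk [_ [_ [F3 _]]]]]].
  set (w := mul v v') in *.
  assert (Wy : mul w (mul f f') = k) by now rewrite Ey, <- !mulA, F2, Hw, F3.
  assert (A1 : mul (mul f f') k = mul f f') by now rewrite Ey, !mulA, Hk.
  assert (A2 : mul (mul f f') k = k) by (rewrite <- Wy at 1; now rewrite <- mulA, yW).
  repeat split; auto using idem_mul_closed; congruence.
Qed.

Lemma Lidem_same a b w : Lidem a w -> Lidem b w -> mul a b = a.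
Proof. intros [_ [_ [_ [Ea _]]]] [_ [_ [_ [_ Eb]]]]; now rewrite <- Ea, mulA, Eb. Qed.

Lemma Ridem_same a b w : Ridem a w -> Ridem b w -> mul a b = b.
Proof. intros [_ [_ [_ [_ Ea]]]] [_ [_ [_ [Eb _]]]]; now rewrite <- Eb, <- mulA, Ea. Qed.

Lemma Lidem_left_regular e u e' v : Lidem e u -> Lidem e' v ->
  mul (mul e e') e = mul e e'.
Proof.
  intros He He'; pose proof (Lidem_mul He He') as Hy.
  assert (Hye : Lidem (mul (mul e e') e) (mul u v)).
  { pose proof (Lidem_mul Hy He) as Hye; pose proof He as [_ [Hu [Huu _]]];
      pose proof He' as [_ [Hv [Hvv _]]].
    assert (Ew : mul (mul u v) u = mul u v)
      by now rewrite mulA, (U_idem_comm Hv Hu), <- mulA, Huu by auto.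
    now rewrite Ew in Hye. }
  pose proof (Lidem_same Hy Hye) as E; destruct Hy as [Hyy _].
  now rewrite <- mulA, Hyy in E.
Qed.

Lemma Ridem_right_regular f v f' v' : Ridem f v -> Ridem f' v' ->
  mul (mul f f') f = mul f' f.
Proof.
  intros Hf Hf'; pose proof (Ridem_mul Hf' Hf) as Hy.
  assert (Hfy : Ridem (mul f (mul f' f)) (mul v' v)).
  { pose proof (Ridem_mul Hf Hy) as Hfy; pose proof Hf as [_ [Hv [Hvv _]]];
      pose proof Hf' as [_ [Hv' [Hvv' _]]].
    assert (Ew : mul v (mul v' v) = mul v' v)
      by now rewrite <- mulA, (U_idem_comm Hv Hv'), mulA, Hvv by auto.
    now rewrite Ew in Hfy. }
  pose proof (Ridem_same Hfy Hy) as E; destruct Hy as [Hyy _].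
  now rewrite mulA, Hyy in E; rewrite mulA.
Qed.

Lemma Lidem_inverse b u x : Lidem b u -> U x -> mul x x = x -> inverse mul b x -> x = u.
Proof.
  intros Hb Hx Hxx [E1 E2]; pose proof Hb as [_ [Hu [Huu _]]].
  pose proof (Lidem_bar Hb) as Bb; pose proof (Lidem_bar (Lidem_refl Hx Hxx)) as Bx.
  assert (F1 : mul (mul u x) u = u).
  { apply (bar_unique (z := b)); [rewrite <- E1 at 1; auto using bar_mul|exact Bb]. }
  assert (F2 : mul (mul x u) x = x).
  { apply (bar_unique (z := x)); [rewrite <- E2 at 1; auto using bar_mul|exact Bx]. }
  rewrite mulA, (U_idem_comm Hx Hu), <- mulA, Huu in F1 by auto.
  rewrite mulA, (U_idem_comm Hu Hx), <- mulA, Hxx in F2 by auto.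
  now rewrite <- F2, (U_idem_comm Hx Hu).
Qed.

Lemma Ridem_inverse b v x : Ridem b v -> U x -> mul x x = x -> inverse mul b x -> x = v.
Proof.
  intros Hb Hx Hxx [E1 E2]; pose proof Hb as [_ [Hv [Hvv _]]].
  pose proof (Ridem_bar Hb) as Bb; pose proof (Ridem_bar (Ridem_refl Hx Hxx)) as Bx.
  assert (F1 : mul (mul v x) v = v).
  { apply (bar_unique (z := b)); [rewrite <- E1 at 1; auto using bar_mul|exact Bb]. }
  assert (F2 : mul (mul x v) x = x).
  { apply (bar_unique (z := x)); [rewrite <- E2 at 1; auto using bar_mul|exact Bx]. }
  rewrite mulA, (U_idem_comm Hx Hv), <- mulA, Hvv in F1 by auto.
  rewrite mulA, (U_idem_comm Hv Hx), <- mulA, Hxx in F2 by auto.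
  now rewrite <- F2, (U_idem_comm Hx Hv).
Qed.

Let val_inj {A : Type} {P : A -> Prop} : forall u v : sig P, val u = val v -> u = v :=
  eq_sig_hprop (fun x => proof_irrelevance (P x)).

Definition in_I (e : T) : Prop := exists u, Lidem e u.
Definition in_Lam (f : T) : Prop := exists v, Ridem f v.

Lemma in_I_mul e e' : in_I e -> in_I e' -> in_I (mul e e').
Proof. intros [u He] [v He']; exists (mul u v); now apply Lidem_mul. Qed.

Lemma in_Lam_mul f f' : in_Lam f -> in_Lam f' -> in_Lam (mul f f').
Proof. intros [v Hf] [v' Hf']; exists (mul v v'); now apply Ridem_mul. Qed.

Definition S0 : Type := {x : T | U x}.
Definition mulS (x y : S0) : S0 :=
  exist U (mul (val x) (val y)) (U_mul (proj2_sig x) (proj2_sig y)).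
Definition TI : Type := {e : T | in_I e}.
Definition mulI (e e' : TI) : TI :=
  exist in_I (mul (val e) (val e')) (in_I_mul (proj2_sig e) (proj2_sig e')).
Definition TL : Type := {f : T | in_Lam f}.
Definition mulL (f f' : TL) : TL :=
  exist in_Lam (mul (val f) (val f')) (in_Lam_mul (proj2_sig f) (proj2_sig f')).

Lemma S0_semigroup : is_semigroup allT mulS.
Proof. split; [now intros|intros; apply val_inj, mulA]. Qed.

Lemma S0_idem x : mulS x x = x <-> mul (val x) (val x) = val x.
Proof. split; [intros E; exact (f_equal val E)|intros; now apply val_inj]. Qed.

Let U_image b : U b <-> exists x : S0, b = val x.
Proof. split; [intros Hb; now exists (exist U b Hb)|intros [x ->]; apply proj2_sig]. Qed.

Lemma S0_Rstar x y : Rstar allT mulS x y <-> Rstar U mul (val x) (val y).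
Proof. symmetry; apply (Rstar_image (f := @proj1_sig T U)); auto using val_inj. Qed.

Lemma S0_Lstar x y : Lstar allT mulS x y <-> Lstar U mul (val x) (val y).
Proof. symmetry; apply (Lstar_image (f := @proj1_sig T U)); auto using val_inj. Qed.

Lemma S0_adequate : adequate allT mulS.
Proof.
  split.
  - intros [x Hx] _; destruct (proj1 U_adequate x Hx) as [[p [[Hp Hpp] Hxp]] [q [[Hq Hqq] Hxq]]].
    split.
    + exists (exist U p Hp); split; [split; [exact I|now apply S0_idem]|now apply S0_Rstar].
    + exists (exist U q Hq); split; [split; [exact I|now apply S0_idem]|now apply S0_Lstar].
  - intros [e He] [f Hf] [_ Ee%S0_idem] [_ Ef%S0_idem]; apply val_inj; cbn in *.
    now apply U_idem_comm.
Qed.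

Local Notation pl := (plusf mulS).
Local Notation st := (starf mulS).

Definition plusv (x : S0) : T := val (pl x).
Definition starv (x : S0) : T := val (st x).

Lemma pv_idem x : mul (plusv x) (plusv x) = plusv x.
Proof. apply S0_idem, (plus_idem S0_semigroup S0_adequate). Qed.

Lemma sv_idem x : mul (starv x) (starv x) = starv x.
Proof. apply S0_idem, (star_idem S0_semigroup S0_adequate). Qed.

Lemma pv_Rstar x : Rstar U mul (val x) (plusv x).
Proof. apply S0_Rstar, (plus_spec S0_semigroup S0_adequate). Qed.

Lemma sv_Lstar x : Lstar U mul (val x) (starv x).
Proof. apply S0_Lstar, (star_spec S0_semigroup S0_adequate). Qed.

Lemma pv_left x : mul (plusv x) (val x) = val x.
Proof. exact (f_equal val (plus_left S0_semigroup S0_adequate x)). Qed.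

Lemma sv_right x : mul (val x) (starv x) = val x.
Proof. exact (f_equal val (star_right S0_semigroup S0_adequate x)). Qed.

Lemma pv_unique x p : U p -> mul p p = p -> Rstar U mul (val x) p -> p = plusv x.
Proof.
  intros Hp Hpp Hxp; apply (f_equal val (x := exist U p Hp)).
  apply (plus_unique S0_semigroup S0_adequate); [now apply S0_idem|now apply S0_Rstar].
Qed.

Lemma sv_unique x q : U q -> mul q q = q -> Lstar U mul (val x) q -> q = starv x.
Proof.
  intros Hq Hqq Hxq; apply (f_equal val (x := exist U q Hq)).
  apply (star_unique S0_semigroup S0_adequate); [now apply S0_idem|now apply S0_Lstar].
Qed.

Lemma pv_of_idem x : mul (val x) (val x) = val x -> plusv x = val x.
Proof. intros Hx; unfold plusv; now rewrite (plus_of_idem S0_semigroup S0_adequate) by now apply S0_idem. Qed.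

Lemma sv_of_idem x : mul (val x) (val x) = val x -> starv x = val x.
Proof. intros Hx; unfold starv; now rewrite (star_of_idem S0_semigroup S0_adequate) by now apply S0_idem. Qed.

Lemma pv_plus x : plusv (pl x) = plusv x.
Proof. unfold plusv; now rewrite (plus_plus S0_semigroup S0_adequate). Qed.

Lemma sv_star x : starv (st x) = starv x.
Proof. unfold starv; now rewrite (star_star S0_semigroup S0_adequate). Qed.

Lemma pv_star x : plusv (st x) = starv x.
Proof. unfold plusv, starv; now rewrite (plus_star S0_semigroup S0_adequate). Qed.

Lemma sv_plus x : starv (pl x) = plusv x.
Proof. unfold plusv, starv; now rewrite (star_plus S0_semigroup S0_adequate). Qed.

Lemma Lidem_pv x : Lidem (plusv x) (plusv x).
Proof. apply Lidem_refl; [exact (proj2_sig _)|apply pv_idem]. Qed.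

Lemma Ridem_sv x : Ridem (starv x) (starv x).
Proof. apply Ridem_refl; [exact (proj2_sig _)|apply sv_idem]. Qed.

Definition jI (x : S0) : TI := exist in_I (plusv x) (ex_intro _ (plusv x) (Lidem_pv x)).
Definition jL (x : S0) : TL := exist in_Lam (starv x) (ex_intro _ (starv x) (Ridem_sv x)).

Lemma TI_left_regular_band : left_regular_band mulI.
Proof.
  split; [split; [now intros|intros; apply val_inj, mulA]|split].
  - intros [e He]; apply val_inj; cbn; now destruct He as [u [Hee _]].
  - intros [e He] [e' He']; apply val_inj; cbn; destruct He as [u He], He' as [v He'].
    exact (Lidem_left_regular He He').
Qed.

Lemma TL_right_regular_band : right_regular_band mulL.
Proof.
  split; [split; [now intros|intros; apply val_inj, mulA]|split].
  - intros [f Hf]; apply val_inj; cbn; now destruct Hf as [v [Hff _]].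
  - intros [f Hf] [f' Hf']; apply val_inj; cbn; destruct Hf as [v Hf], Hf' as [v' Hf'].
    exact (Ridem_right_regular Hf Hf').
Qed.

Lemma inL_val x e : inLc mulS mulI jI x e <-> Lidem (val e) (plusv x).
Proof.
  unfold inLc; destruct e as [e He]; assert (Hee : mul e e = e) by now destruct He as [u [Hee _]].
  rewrite (GreenL_idemP (proj1 TI_left_regular_band));
    [|split; [exact I|now apply val_inj]|split; [exact I|apply val_inj, pv_idem]].
  split.
  - intros [E1%(f_equal val) E2%(f_equal val)]; cbn in *; rewrite pv_plus in E1, E2.
    repeat split; auto using pv_idem; exact (proj2_sig _).
  - intros [_ [_ [_ [E1 E2]]]]; cbn in E1, E2.
    split; apply val_inj; cbn; now rewrite pv_plus.
Qed.

Lemma inR_val x f : inRc mulS mulL jL x f <-> Ridem (val f) (starv x).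
Proof.
  unfold inRc; destruct f as [f Hf]; assert (Hff : mul f f = f) by now destruct Hf as [v [Hff _]].
  rewrite (GreenR_idemP (proj1 TL_right_regular_band));
    [|split; [exact I|now apply val_inj]|split; [exact I|apply val_inj, sv_idem]].
  split.
  - intros [E1%(f_equal val) E2%(f_equal val)]; cbn in *; rewrite sv_star in E1, E2.
    repeat split; auto using sv_idem; exact (proj2_sig _).
  - intros [_ [_ [_ [E1 E2]]]]; cbn in E1, E2.
    split; apply val_inj; cbn; now rewrite sv_star.
Qed.

Lemma jI_sl_transversal : sl_transversal mulS mulI jI.
Proof.
  split; [|split].
  - intros e f [_ He%S0_idem] [_ Hf%S0_idem]; apply val_inj; cbn.
    rewrite !pv_of_idem; auto; cbn; now apply idem_mul_closed.
  - intros e f [_ He%S0_idem] [_ Hf%S0_idem] E%(f_equal val); cbn in E.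
    rewrite !pv_of_idem in E by assumption; now apply val_inj.
  - intros [b Hb]; destruct Hb as [u Hbu].
    pose proof Hbu as [Hbb [Hu [Huu [E1 E2]]]].
    exists (exist U u Hu); split.
    + split; [split; [exact I|now apply S0_idem]|].
      split; apply val_inj; cbn; rewrite pv_of_idem by exact Huu; cbn; congruence.
    + intros x [[_ Hx%S0_idem] [F1%(f_equal val) F2%(f_equal val)]]; cbn in F1, F2.
      rewrite pv_of_idem in F1, F2 by exact Hx.
      apply val_inj; cbn; symmetry; apply (Lidem_inverse Hbu); auto; [exact (proj2_sig _)|now split].
Qed.

Lemma jL_sl_transversal : sl_transversal mulS mulL jL.
Proof.
  split; [|split].
  - intros e f [_ He%S0_idem] [_ Hf%S0_idem]; apply val_inj; cbn.
    rewrite !sv_of_idem; auto; cbn; now apply idem_mul_closed.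
  - intros e f [_ He%S0_idem] [_ Hf%S0_idem] E%(f_equal val); cbn in E.
    rewrite !sv_of_idem in E by assumption; now apply val_inj.
  - intros [b Hb]; destruct Hb as [v Hbv].
    pose proof Hbv as [Hbb [Hv [Hvv [E1 E2]]]].
    exists (exist U v Hv); split.
    + split; [split; [exact I|now apply S0_idem]|].
      split; apply val_inj; cbn; rewrite sv_of_idem by exact Hvv; cbn; congruence.
    + intros x [[_ Hx%S0_idem] [F1%(f_equal val) F2%(f_equal val)]]; cbn in F1, F2.
      rewrite sv_of_idem in F1, F2 by exact Hx.
      apply val_inj; cbn; symmetry; apply (Ridem_inverse Hbv); auto; [exact (proj2_sig _)|now split].
Qed.

Lemma TI_cover e : exists x, idem allT mulS x /\ GreenL allT mulI e (jI x).
Proof.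
  destruct e as [e He]; destruct He as [u Heu]; pose proof Heu as [Hee [Hu [Huu [E1 E2]]]].
  exists (exist U u Hu); split; [split; [exact I|now apply S0_idem]|].
  apply (GreenL_idemP (proj1 TI_left_regular_band)).
  - split; [exact I|now apply val_inj].
  - split; [exact I|apply val_inj, pv_idem].
  - split; apply val_inj; cbn; now rewrite pv_of_idem.
Qed.

Lemma TL_cover f : exists x, idem allT mulS x /\ GreenR allT mulL f (jL x).
Proof.
  destruct f as [f Hf]; destruct Hf as [v Hfv]; pose proof Hfv as [Hff [Hv [Hvv [E1 E2]]]].
  exists (exist U v Hv); split; [split; [exact I|now apply S0_idem]|].
  apply (GreenR_idemP (proj1 TL_right_regular_band)).
  - split; [exact I|now apply val_inj].
  - split; [exact I|apply val_inj, sv_idem].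
  - split; apply val_inj; cbn; now rewrite sv_of_idem.
Qed.

Lemma e_of_in_I z : in_I (e_of z).
Proof. destruct (proj1 (decompP _ _ _ _) (decomp_choice_spec z)) as [_ [_ [p [_ [Hp _]]]]]; now exists p. Qed.

Lemma f_of_in_Lam z : in_Lam (f_of z).
Proof. destruct (proj1 (decompP _ _ _ _) (decomp_choice_spec z)) as [_ [_ [_ [q [_ [Hq _]]]]]]; now exists q. Qed.

Lemma decomp_W x e f : inLc mulS mulI jI x e -> inRc mulS mulL jL x f ->
  decomp allT U mul (mul (mul (val e) (val x)) (val f)) (val x) (val e) (val f).
Proof.
  intros He%inL_val Hf%inR_val.
  apply decomp_intro with (plusv x) (starv x); auto using pv_Rstar, sv_Lstar; exact (proj2_sig x).
Qed.

Lemma decomp_S0 x : decomp allT U mul (val x) (val x) (plusv x) (starv x).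
Proof.
  rewrite <- (sv_right x) at 1; rewrite <- (pv_left x) at 1.
  apply decomp_intro with (plusv x) (starv x); auto using Lidem_pv, Ridem_sv, pv_Rstar, sv_Lstar.
  exact (proj2_sig x).
Qed.

Lemma bar_S0 (x : S0) : is_bar allT U mul (val x) (val x).
Proof. exists (plusv x), (starv x); apply decomp_S0. Qed.

Definition xfgy (x y : S0) (f : TL) (g : TI) : T := mul (mul (mul (val x) (val f)) (val g)) (val y).
Definition alpha (x y : S0) (f : TL) (g : TI) : TI := exist in_I _ (e_of_in_I (xfgy x y f g)).
Definition beta (x y : S0) (f : TL) (g : TI) : TL := exist in_Lam _ (f_of_in_Lam (xfgy x y f g)).

Lemma decomp_zv x y f g : inRc mulS mulL jL x f -> inLc mulS mulI jI y g ->
  decomp allT U mul (xfgy x y f g) (mul (val x) (val y)) (e_of (xfgy x y f g)) (f_of (xfgy x y f g)).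
Proof.
  intros Hf%inR_val Hg%inL_val.
  assert (B : is_bar allT U mul (xfgy x y f g) (mul (val x) (val y))).
  { assert (Exy : mul (val x) (val y) = mul (mul (mul (val x) (starv x)) (plusv y)) (val y))
      by now rewrite sv_right, mulA, pv_left.
    rewrite Exy; unfold xfgy; auto using bar_mul, bar_S0, Ridem_bar, Lidem_bar. }
  destruct B as [e' [f' D]]; destruct (decomp_choice_eq D) as [-> _]; apply decomp_choice_spec.
Qed.

Lemma alpha_beta_range x y f g : inRc mulS mulL jL x f -> inLc mulS mulI jI y g ->
  inLc mulS mulI jI (mulS x y) (alpha x y f g) /\ inRc mulS mulL jL (mulS x y) (beta x y f g).
Proof.
  intros Hf Hg; pose proof (decomp_zv Hf Hg) as [Hb [_ [p [q [He [Hf' [Hbp Hbq]]]]]]]%decompP.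
  assert (Ep : p = plusv (mulS x y)) by (apply pv_unique; auto; apply He).
  assert (Eq : q = starv (mulS x y)) by (apply sv_unique; auto; apply Hf').
  subst p q; split; [apply inL_val|apply inR_val]; assumption.
Qed.

Lemma e_of_S0 (x : S0) : e_of (val x) = plusv x.
Proof. symmetry; apply (decomp_choice_eq (decomp_S0 x)). Qed.

Lemma f_of_S0 (x : S0) : f_of (val x) = starv x.
Proof. symmetry; apply (decomp_choice_eq (decomp_S0 x)). Qed.

Lemma W_cond2_conv : W_cond2 mulS jI jL alpha beta.
Proof.
  intros x y.
  assert (Z : xfgy x y (jL (st x)) (jI (pl y)) = val (mulS x y)).
  { unfold xfgy; cbn; now rewrite sv_star, pv_plus, sv_right, mulA, pv_left. }
  split; apply val_inj; cbn; rewrite Z.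
  - now rewrite e_of_S0, pv_plus.
  - now rewrite f_of_S0, sv_star.
Qed.

Lemma alpha_absorb x y f g : mulI (jI (pl x)) (alpha x y f g) = alpha x y f g.
Proof.
  apply val_inj; cbn; rewrite pv_plus.
  apply (Rstar_fix (decomp_Rstar (decomp_choice_spec (xfgy x y f g))) I).
  unfold xfgy; now rewrite <- !mulA, pv_left.
Qed.

Lemma beta_absorb x y f g : mulL (beta x y f g) (jL (st y)) = beta x y f g.
Proof.
  apply val_inj; cbn; rewrite sv_star.
  apply (Lstar_fix (decomp_Lstar (decomp_choice_spec (xfgy x y f g))) I).
  unfold xfgy; now rewrite mulA, sv_right.
Qed.

Local Notation WS := (Wset mulS mulI mulL jI jL).
Local Notation mW := (mulW mulS mulI mulL alpha beta).

Lemma inL_jI_plus x : inLc mulS mulI jI x (jI (pl x)).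
Proof. apply inL_val; cbn; rewrite pv_plus; apply Lidem_pv. Qed.

Lemma inR_jL_star x : inRc mulS mulL jL x (jL (st x)).
Proof. apply inR_val; cbn; rewrite sv_star; apply Ridem_sv. Qed.

Lemma WS_mul_conv : forall a b, WS a -> WS b -> WS (mW a b).
Proof.
  destruct TI_left_regular_band as [HI [HIidem _]], TL_right_regular_band as [HL [HLidem _]].
  exact (WS_mul S0_semigroup S0_adequate HI HIidem HL HLidem
           (proj1 jI_sl_transversal) (proj1 jL_sl_transversal) alpha_beta_range).
Qed.

Definition phi (w : TI * S0 * TL) : T :=
  let '(e, x, f) := w in mul (mul (val e) (val x)) (val f).

Lemma phi_mul a b : WS a -> WS b -> phi (mW a b) = mul (phi a) (phi b).
Proof.
  destruct a as [[e x] f], b as [[g y] h]; intros [He Hf] [Hg Hh].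
  pose proof (decomp_zv Hf Hg) as [_ [Ez _]]%decompP; cbn.
  set (z := xfgy x y f g) in *; set (e0 := e_of z) in *; set (f0 := f_of z) in *.
  transitivity (mul (mul (val e) z) (val h)); [rewrite Ez; now rewrite !mulA|].
  unfold z, xfgy; now rewrite !mulA.
Qed.

Lemma phi_inj a b : WS a -> WS b -> phi a = phi b -> a = b.
Proof.
  destruct a as [[e x] f], b as [[g y] h]; intros [He Hf] [Hg Hh] E; cbn in E.
  pose proof (decomp_W He Hf) as D1; rewrite E in D1.
  destruct (decomp_unique D1 (decomp_W Hg Hh)) as [E1%val_inj [E2%val_inj E3%val_inj]].
  now subst.
Qed.

Lemma W_cond1_conv : W_cond1 mulS mulI mulL jI jL alpha beta.
Proof.
  intros x y z f g h k Hf Hg Hh Hk.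
  assert (WA : WS (jI (pl x), x, f)) by (split; [apply inL_jI_plus|exact Hf]).
  assert (WB : WS (g, y, h)) by now split.
  assert (WC : WS (k, z, jL (st z))) by (split; [exact Hk|apply inR_jL_star]).
  assert (E : mW (mW (jI (pl x), x, f) (g, y, h)) (k, z, jL (st z))
            = mW (jI (pl x), x, f) (mW (g, y, h) (k, z, jL (st z)))).
  { apply phi_inj; auto using WS_mul_conv.
    rewrite !phi_mul by auto using WS_mul_conv; apply mulA. }
  rewrite !mulW_triple in E; apply triple_inj in E as [E1 [_ E3]].
  rewrite !alpha_absorb in E1; rewrite !beta_absorb in E3.
  split; [exact E1|symmetry; exact E3].
Qed.

Lemma W_cond3_conv : W_cond3 mulS mulI mulL jI jL alpha beta.
Proof.
  intros x x1 x2 e1 f1 e2 f2 e He1 Hf1 He2 Hf2 He Ea Eb Ec.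
  assert (W1 : WS (e1, x1, f1)) by now split.
  assert (W2 : WS (e2, x2, f2)) by now split.
  assert (Wb : WS (e, x, jL (st x))) by (split; [exact He|apply inR_jL_star]).
  assert (Wb' : WS (e, pl x, jL (st (pl x)))).
  { split; [|apply inR_jL_star]; unfold inLc; now rewrite (plus_plus S0_semigroup S0_adequate). }
  assert (E : mW (e1, x1, f1) (e, x, jL (st x)) = mW (e2, x2, f2) (e, x, jL (st x)))
    by (rewrite !mulW_triple; now rewrite Ea, Eb, Ec).
  apply (f_equal phi) in E; rewrite !phi_mul in E by assumption.
  apply (Rstar_cancel (decomp_Rstar (decomp_W He (proj2 Wb))) I I) in E.
  assert (Pb : phi (e, pl x, jL (st (pl x))) = val e).
  { apply inL_val in He; destruct He as [_ [_ [_ [Eu _]]]].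
    cbn; fold (plusv x); now rewrite sv_star, sv_plus, Eu, Eu. }
  assert (E' : mW (e1, x1, f1) (e, pl x, jL (st (pl x))) = mW (e2, x2, f2) (e, pl x, jL (st (pl x)))).
  { apply phi_inj; auto using WS_mul_conv; now rewrite !phi_mul, Pb by assumption. }
  rewrite !mulW_triple in E'; apply triple_inj in E' as [F1 [F2 F3]].
  rewrite !beta_absorb in F3; auto.
Qed.

Lemma W_cond4_conv : W_cond4 mulS mulI mulL jI jL alpha beta.
Proof.
  intros x x1 x2 e1 f1 e2 f2 f He1 Hf1 He2 Hf2 Hf Ea Eb Ec.
  assert (W1 : WS (e1, x1, f1)) by now split.
  assert (W2 : WS (e2, x2, f2)) by now split.
  assert (Wa : WS (jI (pl x), x, f)) by (split; [apply inL_jI_plus|exact Hf]).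
  assert (Wa' : WS (jI (pl (st x)), st x, f)).
  { split; [apply inL_jI_plus|]; unfold inRc; now rewrite (star_star S0_semigroup S0_adequate). }
  assert (E : mW (jI (pl x), x, f) (e1, x1, f1) = mW (jI (pl x), x, f) (e2, x2, f2))
    by (rewrite !mulW_triple; now rewrite Ea, Eb, Ec).
  apply (f_equal phi) in E; rewrite !phi_mul in E by assumption.
  apply (Lstar_cancel (decomp_Lstar (decomp_W (proj1 Wa) Hf)) I I) in E.
  assert (Pa : phi (jI (pl (st x)), st x, f) = val f).
  { apply inR_val in Hf; destruct Hf as [_ [_ [Hss [Ev _]]]].
    cbn; fold (starv x); now rewrite pv_plus, pv_star, Hss, Ev. }
  assert (E' : mW (jI (pl (st x)), st x, f) (e1, x1, f1) = mW (jI (pl (st x)), st x, f) (e2, x2, f2)).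
  { apply phi_inj; auto using WS_mul_conv; now rewrite !phi_mul, Pa by assumption. }
  rewrite !mulW_triple in E'; apply triple_inj in E' as [F1 [F2 F3]].
  rewrite !alpha_absorb in F1; auto.
Qed.

Lemma W_data_conv : W_data mulS mulI mulL jI jL alpha beta.
Proof.
  split; [exact S0_semigroup|split; [exact S0_adequate|]].
  split; [exact TI_left_regular_band|split; [exact TL_right_regular_band|]].
  split; [exact jI_sl_transversal|split; [exact jL_sl_transversal|]].
  split; [exact TI_cover|split; [exact TL_cover|split; [exact alpha_beta_range|]]].
  split; [exact W_cond1_conv|split; [exact W_cond2_conv|split; [exact W_cond3_conv|exact W_cond4_conv]]].
Qed.

Lemma W_iso_conv : iso WS mW allT mul.
Proof.
  split; [split; [exact WS_mul_conv|]|split; [exact HT|]].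
  - intros a b c Ha Hb Hc; apply phi_inj; auto using WS_mul_conv.
    rewrite !phi_mul by auto using WS_mul_conv; apply mulA.
  - exists phi; split; [now intros|split; [exact phi_inj|split; [|exact phi_mul]]].
    intros t _; pose proof (decomp_choice_spec t) as [Hb [Et [p [q [He [Hf [Hbp Hbq]]]]]]]%decompP.
    set (x := exist U _ Hb).
    assert (Ep : p = plusv x) by (apply pv_unique; auto; apply He).
    assert (Eq : q = starv x) by (apply sv_unique; auto; apply Hf).
    subst p q; exists (exist in_I _ (e_of_in_I t), x, exist in_Lam _ (f_of_in_Lam t)).
    split; [split; [now apply inL_val|now apply inR_val]|symmetry; exact Et].
Qed.

End Converse.
Theorem theorem2p16 :
  (forall (S0 : Type) (mulS : S0 -> S0 -> S0) (TI : Type) (mulI : TI -> TI -> TI)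
          (TL : Type) (mulL : TL -> TL -> TL) (jI : S0 -> TI) (jL : S0 -> TL)
          (alpha : S0 -> S0 -> TL -> TI -> TI) (beta : S0 -> S0 -> TL -> TI -> TL),
     W_data mulS mulI mulL jI jL alpha beta ->
     is_semigroup (Wset mulS mulI mulL jI jL) (mulW mulS mulI mulL alpha beta) /\
     quasi_adequate (Wset mulS mulI mulL jI jL) (mulW mulS mulI mulL alpha beta) /\
     exists U : TI * S0 * TL -> Prop,
       admissible (Wset mulS mulI mulL jI jL) U (mulW mulS mulI mulL alpha beta) /\
       iso U (mulW mulS mulI mulL alpha beta) allT mulS /\
       (W_cond5 mulS mulI mulL jI jL alpha beta ->
          iso (Iset (Wset mulS mulI mulL jI jL) U (mulW mulS mulI mulL alpha beta))
              (mulW mulS mulI mulL alpha beta) allT mulI /\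
          iso (Lamset (Wset mulS mulI mulL jI jL) U (mulW mulS mulI mulL alpha beta))
              (mulW mulS mulI mulL alpha beta) allT mulL)) /\
  (forall (T : Type) (mul : T -> T -> T) (U : T -> Prop),
     is_semigroup allT mul -> admissible allT U mul ->
     exists (S0 : Type) (mulS : S0 -> S0 -> S0) (TI : Type) (mulI : TI -> TI -> TI)
            (TL : Type) (mulL : TL -> TL -> TL) (jI : S0 -> TI) (jL : S0 -> TL)
            (alpha : S0 -> S0 -> TL -> TI -> TI) (beta : S0 -> S0 -> TL -> TI -> TL),
       W_data mulS mulI mulL jI jL alpha beta /\
       iso (Wset mulS mulI mulL jI jL) (mulW mulS mulI mulL alpha beta) allT mul).
Proof.
  split.
  - intros S0 mulS TI mulI TL mulL jI jL alpha beta
      [HS [HA [[HI [HIidem _]] [[HL [HLidem _]] [[HjI [HjI' _]] [[HjL [HjL' _]]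
      [HcovI [HcovL [Hrange [H1 [H2 [H3 H4]]]]]]]]]]]].
    split; [eapply W_semigroup; eauto|].
    split; [eapply W_quasi_adequate; eauto|].
    exists (Uiota mulS jI jL); split; [eapply W_admissible; eauto|].
    split; [eapply Uiota_iso; eauto|].
    intros H5; split; [eapply Iset_iso; eauto|eapply Lamset_iso; eauto].
  - intros T mul U HT Had; do 10 eexists.
    split; [exact (W_data_conv HT Had)|exact (W_iso_conv HT Had)].
Qed.
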